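(* Consider $N$ disturbance-free systems $\dot x_i=f(x_i,u_i)$, $y_i=h(x_i)$ that are iOFP with constant $\sigma$ (i.e., the iOFP inequality holds with $d_i=d_i'=0$), over a connected undirected graph with Laplacian $L$ and incidence matrix $B$ with $E$ edges. Attach to each edge $g$ a system $\dot\eta_g=\psi_g(\eta_g,\varrho_g)$, $v_g=\varphi_g(\eta_g,\varrho_g)$ with input $\varrho_g=\sum_j b_{jg}y_j$, where $\psi_g$ is locally Lipschitz, $\varphi_g$ continuous, and there is a positive definite $\Psi_g$ with $\dot\Psi_g(\eta_g)\le-\varrho_g^\top\varrho_g+v_g^\top\varrho_g$ along solutions. Let $u_i=-\sum_{g=1}^E b_{ig}v_g$. If $\lambda_2>\sigma$, where $\lambda_2$ is the smallest nonzero eigenvalue of $L$, and the closed-loop solution $(x,\eta)$ is bounded, then $\lim_{t\to\infty}\|y_i(t)-\bar y(t)\|=0$ for all $i$, with $\bar y=\frac1N\sum_j y_j$.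
   Context: $x_i\in\mathbb R^n$, $u_i,y_i\in\mathbb R^q$, $f$ locally Lipschitz, $h$ continuously differentiable. iOFP with constant $\sigma\in\mathbb R$ (disturbance-free): there exist continuously differentiable $\Phi:\mathbb R^n\times\mathbb R^n\to\mathbb R_{\ge0}$ and class-$\mathcal K_\infty$ $\underline\alpha,\overline\alpha$ with $\underline\alpha(\|x_i-x_i'\|)\le\Phi(x_i,x_i')\le\overline\alpha(\|x_i-x_i'\|)$ and $\frac{\partial\Phi}{\partial x_i}f(x_i,u_i)+\frac{\partial\Phi}{\partial x_i'}f(x_i',u_i')\le\sigma\|y_i-y_i'\|^2+(y_i-y_i')^\top(u_i-u_i')$ for all arguments. Graph: symmetric nonnegative adjacency $A=[a_{ij}]$, connected; $L=\Delta-A$ with $\Delta=\mathrm{diag}(\sum_j a_{ij})$. Incidence matrix $B\in\mathbb R^{N\times E}$: for the $g$-th edge $(i,j)$, $b_{ig}=-\sqrt{a_{ij}}$, $b_{jg}=\sqrt{a_{ij}}$, other entries zero; $L=BB^\top$. *)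

From Stdlib Require Import Reals Lra.
From Stdlib Require Vectors.Fin.
Open Scope R_scope.

Definition vec (n : nat) := Fin.t n -> R.

Fixpoint fsum (n : nat) : (Fin.t n -> R) -> R :=
  match n with
  | O => fun _ => 0
  | S m => fun f => f Fin.F1 + fsum m (fun i => f (Fin.FS i))
  end.

Definition vzero (n : nat) : vec n := fun _ => 0.
Definition vadd {n} (v w : vec n) : vec n := fun k => v k + w k.
Definition vsub {n} (v w : vec n) : vec n := fun k => v k - w k.
Definition vscale {n} (c : R) (v : vec n) : vec n := fun k => c * v k.
Definition vopp {n} (v : vec n) : vec n := fun k => - v k.
Definition vsum {n} (m : nat) (F : Fin.t m -> vec n) : vec n :=
  fun k => fsum m (fun j => F j k).
Definition dot {n} (v w : vec n) : R := fsum n (fun k => v k * w k).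
Definition norm {n} (v : vec n) : R := sqrt (dot v v).

Definition mat (q n : nat) := Fin.t q -> Fin.t n -> R.
Definition mvmul {q n} (M : mat q n) (v : vec n) : vec q :=
  fun i => fsum n (fun k => M i k * v k).

Definition loc_lipschitz2 {n m p} (F : vec n -> vec m -> vec p) : Prop :=
  forall x u, exists r K, 0 < r /\
    forall z w z' w',
      norm (vsub z x) + norm (vsub w u) < r ->
      norm (vsub z' x) + norm (vsub w' u) < r ->
      norm (vsub (F z w) (F z' w')) <= K * (norm (vsub z z') + norm (vsub w w')).

Definition continuous2 {n m p} (F : vec n -> vec m -> vec p) : Prop :=
  forall x u eps, 0 < eps -> exists del, 0 < del /\
    forall z w, norm (vsub z x) + norm (vsub w u) < del ->
      norm (vsub (F z w) (F x u)) < eps.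

Definition C1_map {n q} (h : vec n -> vec q) : Prop :=
  exists Dh : vec n -> mat q n,
    (forall x eps, 0 < eps -> exists del, 0 < del /\
       forall v, norm v < del ->
         norm (vsub (vsub (h (vadd x v)) (h x)) (mvmul (Dh x) v)) <= eps * norm v) /\
    (forall x eps, 0 < eps -> exists del, 0 < del /\
       forall z, norm (vsub z x) < del ->
         forall i k, Rabs (Dh z i k - Dh x i k) < eps).

Definition C1_grad2 {n} (Phi : vec n -> vec n -> R) (G1 G2 : vec n -> vec n -> vec n)
  : Prop :=
  (forall x x' eps, 0 < eps -> exists del, 0 < del /\
     forall a b, norm a + norm b < del ->
       Rabs (Phi (vadd x a) (vadd x' b) - Phi x x' - dot (G1 x x') a - dot (G2 x x') b)
         <= eps * (norm a + norm b)) /\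
  (forall x x' eps, 0 < eps -> exists del, 0 < del /\
     forall z z', norm (vsub z x) + norm (vsub z' x') < del ->
       norm (vsub (G1 z z') (G1 x x')) < eps /\ norm (vsub (G2 z z') (G2 x x')) < eps).

Definition class_Kinf (al : R -> R) : Prop :=
  al 0 = 0 /\
  (forall r, 0 <= r -> forall eps, 0 < eps -> exists del, 0 < del /\
     forall s, 0 <= s -> Rabs (s - r) < del -> Rabs (al s - al r) < eps) /\
  (forall r s, 0 <= r -> r < s -> al r < al s) /\
  (forall M, exists r, 0 <= r /\ M <= al r).

Definition iOFP {n q} (f : vec n -> vec q -> vec n) (h : vec n -> vec q)
  (sigma : R) : Prop :=
  exists (Phi : vec n -> vec n -> R) (G1 G2 : vec n -> vec n -> vec n)
         (alo ahi : R -> R),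
    C1_grad2 Phi G1 G2 /\
    (forall x x', 0 <= Phi x x') /\
    class_Kinf alo /\ class_Kinf ahi /\
    (forall x x', alo (norm (vsub x x')) <= Phi x x' <= ahi (norm (vsub x x'))) /\
    (forall x x' u u',
       dot (G1 x x') (f x u) + dot (G2 x x') (f x' u')
       <= sigma * (norm (vsub (h x) (h x')) ^ 2)
          + dot (vsub (h x) (h x')) (vsub u u')).

Definition fin_lt {N} (i j : Fin.t N) : Prop :=
  (proj1_sig (Fin.to_nat i) < proj1_sig (Fin.to_nat j))%nat.

Definition sym_nonneg_adj {N} (a : Fin.t N -> Fin.t N -> R) : Prop :=
  (forall i j, 0 <= a i j) /\ (forall i j, a i j = a j i).

Inductive reach {N} (a : Fin.t N -> Fin.t N -> R) : Fin.t N -> Fin.t N -> Prop :=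
| reach_refl : forall i, reach a i i
| reach_step : forall i k j, 0 < a i k -> reach a k j -> reach a i j.

Definition connected {N} (a : Fin.t N -> Fin.t N -> R) : Prop :=
  forall i j, reach a i j.

Definition laplacian {N} (a : Fin.t N -> Fin.t N -> R) : mat N N :=
  fun i j => (if Fin.eq_dec i j then fsum N (fun k => a i k) else 0) - a i j.

Definition edge_enum {N E} (a : Fin.t N -> Fin.t N -> R)
  (edge : Fin.t E -> Fin.t N * Fin.t N) : Prop :=
  (forall g, fin_lt (fst (edge g)) (snd (edge g)) /\ 0 < a (fst (edge g)) (snd (edge g))) /\
  (forall g g', edge g = edge g' -> g = g') /\
  (forall i j, fin_lt i j -> 0 < a i j -> exists g, edge g = (i, j)).

Definition incidence {N E} (a : Fin.t N -> Fin.t N -> R)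
  (edge : Fin.t E -> Fin.t N * Fin.t N) : mat N E :=
  fun k g =>
    let (i, j) := edge g in
    if Fin.eq_dec k i then - sqrt (a i j)
    else if Fin.eq_dec k j then sqrt (a i j) else 0.

Definition is_eigenvalue {N} (M : mat N N) (lam : R) : Prop :=
  exists v : vec N, (exists k, v k <> 0) /\ mvmul M v = vscale lam v.

Definition smallest_nonzero_eigenvalue {N} (M : mat N N) (lam2 : R) : Prop :=
  is_eigenvalue M lam2 /\ lam2 <> 0 /\
  forall mu, is_eigenvalue M mu -> mu <> 0 -> lam2 <= mu.

Definition pos_def {p} (Psi : vec p -> R) : Prop :=
  Psi (vzero p) = 0 /\ forall eta, (exists k, eta k <> 0) -> 0 < Psi eta.

Definition vderiv {n} (z : R -> vec n) (t : R) (d : vec n) : Prop :=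
  forall k, derivable_pt_lim (fun s => z s k) t (d k).

Definition vcont_at {n} (z : R -> vec n) (t : R) : Prop :=
  forall k, continuity_pt (fun s => z s k) t.

Definition edge_dissipative {p q} (psi : vec p -> vec q -> vec p)
  (phi : vec p -> vec q -> vec q) (Psi : vec p -> R) : Prop :=
  forall (t1 t2 : R) (eta : R -> vec p) (rho : R -> vec q),
    (forall t, t1 < t < t2 -> vcont_at rho t) ->
    (forall t, t1 < t < t2 -> vderiv eta t (psi (eta t) (rho t))) ->
    forall t, t1 < t < t2 ->
      exists D, derivable_pt_lim (fun s => Psi (eta s)) t D /\
        D <= - dot (rho t) (rho t) + dot (phi (eta t) (rho t)) (rho t).

(** The Lyapunov function
    [V = sum_(i,j) Phi(x_i, x_j) + 2 N sum_g Psi_g(eta_g)]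
    satisfies [V' <= -2 N (lam2 - sigma) sum_i |y_i - ybar|^2].  The iOFP
    inequality summed over all pairs [(i,j)] produces
    [2 N (sigma S - y^T (B (x) I) v)] with [S = sum_i |y_i - ybar|^2], the
    dissipation of the edge systems cancels the cross term and contributes
    [-2 N |(B^T (x) I) y|^2], and [|B^T z|^2 = z^T L z >= lam2 |z|^2] for
    [z] orthogonal to the constant vectors.  Boundedness of the trajectory
    makes every [|y_i - ybar|^2] Lipschitz in time, and a nonnegative
    function whose integral is finite and which is Lipschitz tends to [0]
    (Barbalat). *)
From Stdlib Require Import Reals.
From Stdlib Require Vectors.Fin.
From Stdlib Require Import Lra Lia FunctionalExtensionality ClassicalEpsilon Classical.
Open Scope R_scope.

Lemma Rabs_le_bounds x a : Rabs x <= a -> -a <= x <= a.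
Proof. unfold Rabs; destruct (Rcase_abs x); lra. Qed.

Lemma fsum_ext n (f g : Fin.t n -> R) : (forall i, f i = g i) -> fsum n f = fsum n g.
Proof.
  induction n; simpl; intros H; auto.
  rewrite H. f_equal. apply IHn. intros; apply H.
Qed.

Lemma fsum_plus n (f g : Fin.t n -> R) :
  fsum n (fun i => f i + g i) = fsum n f + fsum n g.
Proof. induction n; simpl. lra. rewrite IHn. lra. Qed.

Lemma fsum_scal n c (f : Fin.t n -> R) :
  fsum n (fun i => c * f i) = c * fsum n f.
Proof. induction n; simpl. lra. rewrite IHn. lra. Qed.

Lemma fsum_scalr n c (f : Fin.t n -> R) :
  fsum n (fun i => f i * c) = fsum n f * c.
Proof. induction n; simpl. lra. rewrite IHn. lra. Qed.

Lemma fsum_opp n (f : Fin.t n -> R) :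
  fsum n (fun i => - f i) = - fsum n f.
Proof. induction n; simpl. lra. rewrite IHn. lra. Qed.

Lemma fsum_minus n (f g : Fin.t n -> R) :
  fsum n (fun i => f i - g i) = fsum n f - fsum n g.
Proof. induction n; simpl. lra. rewrite IHn. lra. Qed.

Lemma fsum_const n c : fsum n (fun _ => c) = INR n * c.
Proof. induction n; simpl fsum. simpl; lra. rewrite IHn, S_INR. lra. Qed.

Lemma fsum_zero n (f : Fin.t n -> R) : (forall i, f i = 0) -> fsum n f = 0.
Proof. intros H. rewrite (fsum_ext _ _ (fun _ => 0)); auto. rewrite fsum_const; lra. Qed.

Lemma fsum_le n (f g : Fin.t n -> R) : (forall i, f i <= g i) -> fsum n f <= fsum n g.
Proof.
  induction n; simpl; intros H. lra.
  pose proof (H Fin.F1).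
  pose proof (IHn (fun i => f (Fin.FS i)) (fun i => g (Fin.FS i)) (fun i => H _)). lra.
Qed.

Lemma fsum_nonneg n (f : Fin.t n -> R) : (forall i, 0 <= f i) -> 0 <= fsum n f.
Proof. intros H. rewrite <- (fsum_zero n (fun _ => 0)); auto. apply fsum_le; auto. Qed.

Lemma fsum_bound n (f : Fin.t n -> R) C : (forall i, f i <= C) -> fsum n f <= INR n * C.
Proof. intros H. rewrite <- fsum_const. apply fsum_le; auto. Qed.

Lemma fsum_abs n (f : Fin.t n -> R) : Rabs (fsum n f) <= fsum n (fun i => Rabs (f i)).
Proof.
  induction n; simpl. rewrite Rabs_R0; lra.
  eapply Rle_trans. apply Rabs_triang. pose proof (IHn (fun i => f (Fin.FS i))). lra.
Qed.

Lemma fsum_swap n m (F : Fin.t n -> Fin.t m -> R) :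
  fsum n (fun i => fsum m (fun j => F i j)) = fsum m (fun j => fsum n (fun i => F i j)).
Proof.
  induction n; simpl.
  - symmetry; apply fsum_zero; auto.
  - rewrite IHn. rewrite <- fsum_plus. reflexivity.
Qed.

Lemma fsum_swap3 n1 n2 n3 (F : Fin.t n1 -> Fin.t n2 -> Fin.t n3 -> R) :
  fsum n1 (fun i => fsum n2 (fun k => fsum n3 (fun g => F i k g))) =
  fsum n3 (fun g => fsum n2 (fun k => fsum n1 (fun i => F i k g))).
Proof.
  rewrite (fsum_ext n1 _ (fun i => fsum n3 (fun g => fsum n2 (fun k => F i k g))))
    by (intros; apply fsum_swap).
  rewrite fsum_swap. apply fsum_ext. intros g. apply fsum_swap.
Qed.

Lemma fsum_single n (f : Fin.t n -> R) j0 :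
  (forall j, j <> j0 -> f j = 0) -> fsum n f = f j0.
Proof.
  induction n.
  - inversion j0.
  - intros H. simpl. revert H. apply (Fin.caseS' j0).
    + intros H. rewrite fsum_zero. lra. intros i; apply H. intro E; inversion E.
    + intros p H. rewrite H. 2:{ intro E; inversion E. }
      rewrite (IHn (fun i => f (Fin.FS i)) p). lra.
      intros j Hj. apply H. intro E. apply Hj. apply Fin.FS_inj; auto.
Qed.

Lemma fsum_pair n (f : Fin.t n -> R) j1 j2 : j1 <> j2 ->
  (forall j, j <> j1 -> j <> j2 -> f j = 0) -> fsum n f = f j1 + f j2.
Proof.
  intros Hne H.
  rewrite (fsum_ext _ f (fun i => (if Fin.eq_dec i j1 then f i else 0)
                                + (if Fin.eq_dec i j1 then 0 else f i)))
    by (intros i; destruct (Fin.eq_dec i j1); lra).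
  rewrite fsum_plus, (fsum_single _ _ j1), (fsum_single _ _ j2).
  - destruct (Fin.eq_dec j1 j1); [|congruence]. destruct (Fin.eq_dec j2 j1); [congruence|]. lra.
  - intros j Hj. destruct (Fin.eq_dec j j1); auto.
  - intros j Hj. destruct (Fin.eq_dec j j1); congruence.
Qed.

Lemma fsum_ge_term n (f : Fin.t n -> R) j : (forall i, 0 <= f i) -> f j <= fsum n f.
Proof.
  intros H.
  assert (E : fsum n (fun i => if Fin.eq_dec i j then f i else 0) = f j).
  { rewrite (fsum_single _ _ j). destruct (Fin.eq_dec j j); congruence.
    intros j0 Hj. destruct (Fin.eq_dec j0 j); congruence. }
  rewrite <- E. apply fsum_le. intros i. destruct (Fin.eq_dec i j); auto; lra.
Qed.

Lemma fsum_nonneg_eq0 n (f : Fin.t n -> R) :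
  (forall i, 0 <= f i) -> fsum n f = 0 -> forall i, f i = 0.
Proof. intros H S i. pose proof (fsum_ge_term n f i H). pose proof (H i). lra. Qed.

Lemma fsum_sqr_eq0 n (f : Fin.t n -> R) :
  fsum n (fun i => f i * f i) = 0 -> forall i, f i = 0.
Proof.
  intros H i. pose proof (fsum_nonneg_eq0 n _ (fun i => Rle_0_sqr (f i)) H i).
  now apply Rsqr_0_uniq.
Qed.

Lemma fsum_avg_Rabs_le N (w : Fin.t N -> R) C : (0 < N)%nat ->
  (forall j, Rabs (w j) <= C) -> Rabs (/ INR N * fsum N w) <= C.
Proof.
  intros HN H. pose proof (lt_0_INR _ HN). rewrite Rabs_mult, Rabs_inv, Rabs_right by lra.
  eapply Rle_trans. apply Rmult_le_compat_l. left; apply Rinv_0_lt_compat; auto.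
  eapply Rle_trans. apply fsum_abs. apply fsum_bound. apply H.
  right. field. lra.
Qed.

Lemma fsum_Rabs_mul_le m (c w : Fin.t m -> R) Cc Cw : 0 <= Cc ->
  (forall j, Rabs (c j) <= Cc) -> (forall j, Rabs (w j) <= Cw) ->
  Rabs (fsum m (fun j => c j * w j)) <= INR m * (Cc * Cw).
Proof.
  intros H0 Hc Hw. eapply Rle_trans. apply fsum_abs. apply fsum_bound. intros j.
  rewrite Rabs_mult. apply Rmult_le_compat; auto; apply Rabs_pos.
Qed.

Lemma fsum_pair_diff N (A Bv : Fin.t N -> R) :
  fsum N (fun i => fsum N (fun j => (A i - A j) * (Bv i - Bv j))) =
  2 * INR N * fsum N (fun i => A i * Bv i) - 2 * fsum N A * fsum N Bv.
Proof.
  rewrite (fsum_ext N _ (fun i => (INR N * (A i * Bv i) - A i * fsum N Bv)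
                                 - (Bv i * fsum N A - fsum N (fun j => A j * Bv j)))).
  - rewrite !fsum_minus, fsum_scal, fsum_const.
    rewrite (fsum_ext N (fun i => A i * fsum N Bv) (fun i => fsum N Bv * A i)) by (intros; ring).
    rewrite (fsum_ext N (fun i => Bv i * fsum N A) (fun i => fsum N A * Bv i)) by (intros; ring).
    rewrite !fsum_scal. ring.
  - intros i.
    rewrite (fsum_ext N _ (fun j => (A i * Bv i - A i * Bv j) - (Bv i * A j - A j * Bv j)))
      by (intros; ring).
    rewrite !fsum_minus, fsum_const, !fsum_scal. ring.
Qed.

Lemma fsum_variance N (A : Fin.t N -> R) : (0 < N)%nat ->
  2 * INR N * fsum N (fun i => (A i - / INR N * fsum N A) * (A i - / INR N * fsum N A)) =
  2 * INR N * fsum N (fun i => A i * A i) - 2 * fsum N A * fsum N A.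
Proof.
  intros HN. pose proof (lt_0_INR _ HN). set (s := fsum N A).
  rewrite (fsum_ext N _ (fun i => A i * A i - 2 * (/ INR N * s) * A i
                                 + (/ INR N * s) * (/ INR N * s))) by (intros; ring).
  rewrite fsum_plus, fsum_minus, fsum_scal, fsum_const. fold s. field. lra.
Qed.

Lemma fin_uniform_bound {Z : Type} m (F : Fin.t m -> Z -> R) (P : Z -> Prop) :
  (forall k, exists C, forall z, P z -> Rabs (F k z) <= C) ->
  exists C, 0 <= C /\ forall k z, P z -> Rabs (F k z) <= C.
Proof.
  induction m; intros H.
  - exists 0. split. lra. intros k; inversion k.
  - destruct (IHm (fun k => F (Fin.FS k))) as [C1 [H1 HC1]]. intros; apply H.
    destruct (H Fin.F1) as [C0 HC0]. exists (Rmax C1 C0). split.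
    + eapply Rle_trans; [apply H1|apply Rmax_l].
    + intros k. apply (Fin.caseS' k).
      * intros z Hz. eapply Rle_trans; [apply HC0; auto|apply Rmax_r].
      * intros p0 z Hz. eapply Rle_trans; [apply HC1; auto|apply Rmax_l].
Qed.

Lemma fin_choice {A} m (P : Fin.t m -> A -> Prop) (a0 : A) :
  (forall k, exists x, P k x) -> exists F : Fin.t m -> A, forall k, P k (F k).
Proof.
  intros H. exists (fun k => epsilon (inhabits a0) (P k)). intros k.
  apply epsilon_spec. auto.
Qed.

Lemma dot_self_nonneg n (v : vec n) : 0 <= dot v v.
Proof. unfold dot. apply fsum_nonneg. intros; apply Rle_0_sqr. Qed.

Lemma norm_nonneg n (v : vec n) : 0 <= norm v.
Proof. unfold norm. apply sqrt_pos. Qed.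

Lemma norm_pow2 n (v : vec n) : norm v ^ 2 = dot v v.
Proof. unfold norm. simpl. rewrite Rmult_1_r. apply sqrt_sqrt, dot_self_nonneg. Qed.

Lemma norm_ext n (v w : vec n) : (forall k, v k = w k) -> norm v = norm w.
Proof. intros H. unfold norm, dot. f_equal. apply fsum_ext. intros; rewrite H; auto. Qed.

Lemma norm_vec0 (v : vec 0) : norm v = 0.
Proof. unfold norm, dot; simpl. apply sqrt_0. Qed.

Lemma norm_vsub_self n (z : vec n) : norm (vsub z z) = 0.
Proof. unfold norm, dot, vsub. rewrite fsum_zero. apply sqrt_0. intros; ring. Qed.

Lemma Rabs_coord_le_norm n (v : vec n) k : Rabs (v k) <= norm v.
Proof.
  unfold norm. rewrite <- sqrt_Rsqr_abs. apply sqrt_le_1_alt.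
  apply (fsum_ge_term n (fun k => v k * v k)). intros; apply Rle_0_sqr.
Qed.

Lemma norm_le_sum_Rabs n (v : vec n) : norm v <= fsum n (fun k => Rabs (v k)).
Proof.
  assert (Hsq : dot v v <= fsum n (fun k => Rabs (v k)) ^ 2).
  { unfold dot. induction n; simpl. lra.
    pose proof (IHn (fun i => v (Fin.FS i))) as H. simpl in H.
    pose proof (fsum_nonneg n (fun i => Rabs (v (Fin.FS i))) (fun i => Rabs_pos _)).
    pose proof (Rabs_pos (v Fin.F1)).
    pose proof (Rsqr_abs (v Fin.F1)). unfold Rsqr in *. nra. }
  unfold norm. rewrite <- (sqrt_pow2 (fsum n (fun k => Rabs (v k)))).
  - apply sqrt_le_1_alt. exact Hsq.
  - apply fsum_nonneg; intros; apply Rabs_pos.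
Qed.

Lemma Rabs_dot_le n (G w : vec n) e : (forall k, Rabs (w k) <= e) ->
  Rabs (dot G w) <= fsum n (fun k => Rabs (G k)) * e.
Proof.
  intros H. unfold dot. eapply Rle_trans. apply fsum_abs. rewrite <- fsum_scalr.
  apply fsum_le. intros k. rewrite Rabs_mult. apply Rmult_le_compat_l. apply Rabs_pos. auto.
Qed.

Lemma vadd_vsub n (c z : vec n) : vadd c (vsub z c) = z.
Proof. apply functional_extensionality; intros k. unfold vadd, vsub. ring. Qed.

Lemma dot_eq0_vec n (v : vec n) : dot v v = 0 -> forall k, v k = 0.
Proof. apply fsum_sqr_eq0. Qed.

(** * Compactness of boxes *)

(* This is the finite-subcover property in a
   form that needs no indexing of covers. *)
Definition compact_for {X : Type} (nb : X -> R -> X -> Prop) (K : X -> Prop) :=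
  forall Good : (X -> Prop) -> Prop,
    (forall A B, Good A -> Good B -> Good (fun z => A z \/ B z)) ->
    (forall A B, (forall z, A z -> B z) -> Good B -> Good A) ->
    (forall z, exists r, 0 < r /\ Good (nb z r)) -> Good K.

Definition prod_nb {X Y} (nbX : X -> R -> X -> Prop) (nbY : Y -> R -> Y -> Prop) :
  X * Y -> R -> X * Y -> Prop :=
  fun p r p' => nbX (fst p) r (fst p') /\ nbY (snd p) r (snd p').

Lemma compact_prod {X Y} (nbX : X -> R -> X -> Prop) (nbY : Y -> R -> Y -> Prop) KX KY :
  (forall x r r' y, r' <= r -> nbX x r' y -> nbX x r y) ->
  compact_for nbX KX -> compact_for nbY KY ->
  compact_for (prod_nb nbX nbY) (fun p => KX (fst p) /\ KY (snd p)).
Proof.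
  intros Hmo HX HY Good U Mo L.
  assert (Slice : forall x, exists r, 0 < r /\
                    Good (fun p => nbX x r (fst p) /\ KY (snd p))).
  { intros x.
    apply (HY (fun S => exists r, 0 < r /\ Good (fun p => nbX x r (fst p) /\ S (snd p)))).
    - intros A B [r1 [H1 G1]] [r2 [H2 G2]]. exists (Rmin r1 r2). split.
      + apply Rmin_pos; auto.
      + eapply Mo. 2: apply (U _ _ G1 G2). simpl. intros p [Hp [Ha|Hb]].
        * left. split; auto. eapply Hmo; [apply Rmin_l|]; eauto.
        * right. split; auto. eapply Hmo; [apply Rmin_r|]; eauto.
    - intros A B HAB [r [Hr G]]. exists r; split; auto. eapply Mo; [|apply G].
      simpl; intros p [? ?]; split; auto.
    - intros y. destruct (L (x, y)) as [r [Hr G]]. exists r; split; [exact Hr|].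
      exists r; split; [exact Hr|]. eapply Mo; [|apply G]. unfold prod_nb. simpl. auto. }
  apply (HX (fun S => Good (fun p => S (fst p) /\ KY (snd p)))).
  - intros A B GA GB. eapply Mo; [|apply (U _ _ GA GB)]. simpl. intros p [[Ha|Hb] Hk]; auto.
  - intros A B HAB G. eapply Mo; [|apply G]. simpl. intros p [? ?]; auto.
  - intros x. destruct (Slice x) as [r [Hr G]]. exists r; auto.
Qed.

Definition interval_nb (c r c' : R) : Prop := Rabs (c' - c) < r.

Lemma compact_interval M : compact_for interval_nb (fun c => Rabs c <= M).
Proof.
  intros Good U Mo L.
  destruct (Rlt_or_le M 0) as [HM|HM].
  { destruct (L 0) as [r [Hr G]]. eapply Mo; [|apply G]. intros z Hz.
    pose proof (Rabs_pos z). lra. }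
  (* the supremum of the [s] for which [Good [-M, s]] holds is [M] *)
  set (E := fun s => -M <= s <= M /\ Good (fun c => -M <= c <= s)).
  assert (HE : E (-M)).
  { split. lra. destruct (L (-M)) as [r [Hr G]]. eapply Mo; [|apply G].
    intros c Hc. unfold interval_nb. replace (c - - M) with 0 by lra. rewrite Rabs_R0; auto. }
  assert (Hb : bound E). { exists M. intros s [Hs _]. lra. }
  destruct (completeness E Hb (ex_intro _ _ HE)) as [s [Hub Hlub]].
  assert (Hs1 : -M <= s) by (apply Hub; auto).
  assert (Hs2 : s <= M) by (apply Hlub; intros z [Hz _]; lra).
  destruct (L s) as [r [Hr G]].
  assert (He : exists e, E e /\ s - r < e).
  { apply NNPP. intro Hn. assert (s <= s - r); [|lra].
    apply Hlub. intros z Hz. destruct (Rle_or_lt z (s - r)); auto. exfalso; apply Hn; eauto. }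
  destruct He as [e [[He1 Ge] He2]].
  assert (Hs' : E (Rmin M (s + r/2))).
  { split. split. apply Rmin_glb; lra. apply Rmin_l.
    eapply Mo; [|apply (U _ _ Ge G)]. intros c [Hc1 Hc2].
    destruct (Rle_or_lt c e). left; lra. right. unfold interval_nb.
    assert (c <= s + r/2) by (eapply Rle_trans; [apply Hc2| apply Rmin_r]).
    apply Rabs_def1; lra. }
  assert (HsM : Rmin M (s + r/2) <= s) by (apply Hub; auto).
  assert (Rmin M (s + r / 2) = M).
  { unfold Rmin in *. destruct (Rle_dec M (s + r/2)); lra. }
  destruct Hs' as [_ Gs]. rewrite H in Gs. eapply Mo; [|apply Gs].
  intros c Hc. destruct (Rabs_le_bounds _ _ Hc). lra.
Qed.

Definition ball n (z : vec n) (r : R) : vec n -> Prop := fun z' => norm (vsub z' z) < r.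
Definition box n (M : R) : vec n -> Prop := fun z => forall k, Rabs (z k) <= M.

Lemma box_of_norm n M (z : vec n) : norm z <= M -> box n M z.
Proof. intros H k. eapply Rle_trans; [apply Rabs_coord_le_norm|]; auto. Qed.

Lemma box_le n M1 M2 (z : vec n) : M1 <= M2 -> box n M1 z -> box n M2 z.
Proof. intros H Hz k. specialize (Hz k). lra. Qed.

Definition vtail {n} (z : vec (S n)) : vec n := fun i => z (Fin.FS i).
Definition vcons {n} (c : R) (w : vec n) : vec (S n) :=
  fun i => Fin.caseS' i (fun _ => R) c (fun j => w j).

Lemma norm_le_head_tail n (v : vec (S n)) : norm v <= Rabs (v Fin.F1) + norm (vtail v).
Proof.
  pose proof (dot_self_nonneg _ (vtail v)) as Hb.
  unfold norm, dot, vtail in *. simpl.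
  set (b := fsum n (fun k => v (Fin.FS k) * v (Fin.FS k))) in *.
  pose proof (sqrt_pos b). pose proof (Rabs_pos (v Fin.F1)).
  rewrite <- (sqrt_pow2 (Rabs (v Fin.F1) + sqrt b)) by lra. apply sqrt_le_1_alt.
  pose proof (Rsqr_abs (v Fin.F1)). unfold Rsqr in *.
  pose proof (sqrt_sqrt b Hb). nra.
Qed.

Lemma compact_box n M : compact_for (ball n) (box n M).
Proof.
  induction n.
  - intros Good U Mo L. destruct (L (fun _ => 0)) as [r [Hr G]].
    eapply Mo; [|apply G]. intros z _. unfold ball. rewrite norm_vec0. auto.
  - intros Good U Mo L.
    pose proof (compact_prod interval_nb (ball n) _ _
                  (fun x r r' y Hle H => Rlt_le_trans _ _ _ H Hle)
                  (compact_interval M) IHn) as P.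
    specialize (P (fun S => Good (fun z => S (z Fin.F1, vtail z)))).
    eapply Mo; [|apply P].
    + intros z Hz. simpl. split. apply Hz. intros k; apply Hz.
    + intros A B GA GB. eapply Mo; [|apply (U _ _ GA GB)]. simpl; auto.
    + intros A B HAB G. eapply Mo; [|apply G]. simpl; auto.
    + intros [c w]. destruct (L (vcons c w)) as [r [Hr G]]. exists (r/2). split. lra.
      eapply Mo; [|apply G]. unfold prod_nb, interval_nb, ball. simpl. intros z [H1 H2].
      eapply Rle_lt_trans. apply norm_le_head_tail.
      replace (norm (vtail (vsub z (vcons c w)))) with (norm (vsub (vtail z) w))
        by (apply norm_ext; reflexivity).
      unfold vsub at 1. simpl. lra.
Qed.

Lemma compact_box2 n m M :
  compact_for (prod_nb (ball n) (ball m)) (fun p => box n M (fst p) /\ box m M (snd p)).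
Proof.
  apply compact_prod; [|apply compact_box..].
  intros x r r' y Hle H. exact (Rlt_le_trans _ _ _ H Hle).
Qed.

Lemma compact_bounded {X} (nb : X -> R -> X -> Prop) K (F : X -> R) :
  compact_for nb K ->
  (forall z, exists r, 0 < r /\ exists C, forall z', nb z r z' -> Rabs (F z') <= C) ->
  exists C, forall z, K z -> Rabs (F z) <= C.
Proof.
  intros HK L. apply (HK (fun S => exists C, forall z, S z -> Rabs (F z) <= C)).
  - intros A B [C1 H1] [C2 H2]. exists (Rmax C1 C2). intros z [Ha|Hb].
    + eapply Rle_trans; [apply H1; auto| apply Rmax_l].
    + eapply Rle_trans; [apply H2; auto| apply Rmax_r].
  - intros A B HAB [C H]. exists C; auto.
  - exact L.
Qed.

Definition contv {n} (F : vec n -> R) (z : vec n) : Prop :=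
  forall eps, 0 < eps -> exists r, 0 < r /\
    forall z', norm (vsub z' z) < r -> Rabs (F z' - F z) < eps.

Lemma contv_const n c (z : vec n) : contv (fun _ => c) z.
Proof.
  intros eps He. exists 1. split. lra. intros.
  replace (c - c) with 0 by ring. rewrite Rabs_R0; lra.
Qed.

Lemma contv_coord n k (z : vec n) : contv (fun v => v k) z.
Proof.
  intros eps He. exists eps. split. auto. intros z' H. eapply Rle_lt_trans; [|apply H].
  apply (Rabs_coord_le_norm n (vsub z' z) k).
Qed.

Lemma contv_plus n F G (z : vec n) : contv F z -> contv G z -> contv (fun v => F v + G v) z.
Proof.
  intros HF HG eps He.
  destruct (HF (eps/2)) as [r1 [H1 F1]]. lra. destruct (HG (eps/2)) as [r2 [H2 G2]]. lra.
  exists (Rmin r1 r2). split. apply Rmin_pos; auto. intros z' Hz.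
  specialize (F1 z' (Rlt_le_trans _ _ _ Hz (Rmin_l _ _))).
  specialize (G2 z' (Rlt_le_trans _ _ _ Hz (Rmin_r _ _))).
  replace (F z' + G z' - (F z + G z)) with ((F z' - F z) + (G z' - G z)) by ring.
  eapply Rle_lt_trans. apply Rabs_triang. lra.
Qed.

Lemma contv_mult n F G (z : vec n) : contv F z -> contv G z -> contv (fun v => F v * G v) z.
Proof.
  intros HF HG eps He.
  set (A := Rabs (F z) + 1). set (Bb := Rabs (G z) + 1).
  assert (HA : 1 <= A) by (unfold A; pose proof (Rabs_pos (F z)); lra).
  assert (HB : 1 <= Bb) by (unfold Bb; pose proof (Rabs_pos (G z)); lra).
  set (e1 := Rmin 1 (eps / (2 * Bb))). set (e2 := eps / (2 * (A + 1))).
  assert (He1 : 0 < e1) by (apply Rmin_pos; [lra| apply Rdiv_lt_0_compat; lra]).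
  assert (He2 : 0 < e2) by (apply Rdiv_lt_0_compat; lra).
  destruct (HF e1 He1) as [r1 [H1 F1]]. destruct (HG e2 He2) as [r2 [H2 G2]].
  exists (Rmin r1 r2). split. apply Rmin_pos; auto. intros z' Hz.
  specialize (F1 z' (Rlt_le_trans _ _ _ Hz (Rmin_l _ _))).
  specialize (G2 z' (Rlt_le_trans _ _ _ Hz (Rmin_r _ _))).
  replace (F z' * G z' - F z * G z) with (F z' * (G z' - G z) + (F z' - F z) * G z) by ring.
  eapply Rle_lt_trans. apply Rabs_triang. rewrite !Rabs_mult.
  assert (HFz' : Rabs (F z') <= A).
  { unfold A. pose proof (Rabs_triang (F z' - F z) (F z)).
    replace (F z' - F z + F z) with (F z') in H by ring.
    pose proof (Rmin_l 1 (eps / (2 * Bb))). fold e1 in H0. lra. }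
  assert (e1 <= eps / (2 * Bb)) by apply Rmin_r.
  assert (Rabs (F z') * Rabs (G z' - G z) <= A * e2)
    by (apply Rmult_le_compat; try apply Rabs_pos; lra).
  assert (Rabs (F z' - F z) * Rabs (G z) <= e1 * Bb)
    by (apply Rmult_le_compat; try apply Rabs_pos; unfold Bb; lra).
  assert (A * e2 < eps / 2).
  { unfold e2. apply (Rmult_lt_reg_r (2 * (A + 1))). lra.
    replace (A * (eps / (2 * (A + 1))) * (2 * (A + 1))) with (A * eps) by (field; lra). nra. }
  assert (e1 * Bb <= eps / 2).
  { apply Rle_trans with (eps / (2 * Bb) * Bb). apply Rmult_le_compat_r; lra.
    right. field. lra. }
  lra.
Qed.

Lemma contv_fsum n m (F : Fin.t m -> vec n -> R) (z : vec n) :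
  (forall j, contv (F j) z) -> contv (fun v => fsum m (fun j => F j v)) z.
Proof.
  induction m; intros H; simpl.
  - apply contv_const.
  - apply (contv_plus n (F Fin.F1) (fun v => fsum m (fun j => F (Fin.FS j) v))). apply H.
    apply (IHm (fun j => F (Fin.FS j))). intros; apply H.
Qed.

Lemma contv_neq_nbhd n (F : vec n -> R) z c : contv F z -> F z <> c ->
  exists r, 0 < r /\ forall z', norm (vsub z' z) < r -> F z' <> c.
Proof.
  intros H Hne. destruct (H (Rabs (F z - c))) as [r [Hr Hr']].
  { apply Rabs_pos_lt. lra. }
  exists r. split; auto. intros z' Hz Ez. specialize (Hr' z' Hz).
  rewrite Ez, Rabs_minus_sym in Hr'. lra.
Qed.

Lemma contv_locally_bounded n (F : vec n -> R) z : contv F z ->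
  exists r, 0 < r /\ exists C, forall z', ball n z r z' -> Rabs (F z') <= C.
Proof.
  intros H. destruct (H 1 Rlt_0_1) as [r [Hr Hr']]. exists r. split; auto.
  exists (Rabs (F z) + 1). intros z' Hz'. specialize (Hr' z' Hz').
  pose proof (Rabs_triang (F z' - F z) (F z)).
  replace (F z' - F z + F z) with (F z') in H0 by ring. lra.
Qed.

Lemma bounded_below_inf {X} (S : X -> Prop) (F : X -> R) C :
  (forall z, S z -> C <= F z) -> (exists z, S z) ->
  exists m, (forall z, S z -> m <= F z) /\ (forall e, 0 < e -> exists z, S z /\ F z < m + e).
Proof.
  intros HC [z0 Hz0].
  set (Es := fun r => exists z, S z /\ r = - F z).
  assert (Hb : bound Es) by (exists (- C); intros r [z [Hz ->]]; specialize (HC z Hz); lra).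
  destruct (completeness Es Hb (ex_intro _ _ (ex_intro _ z0 (conj Hz0 eq_refl))))
    as [l [Hub Hlub]].
  exists (- l). split.
  - intros z Hz. assert (- F z <= l) by (apply Hub; exists z; auto). lra.
  - intros e He. apply NNPP. intros Hn. assert (l <= l - e); [|lra].
    apply Hlub. intros r [z [Hz ->]]. destruct (Rle_or_lt (- F z) (l - e)); auto.
    exfalso. apply Hn. exists z. split; auto. lra.
Qed.

(* The reciprocal [1 / (F - m)] of the gap to the infimum would be locally
   bounded on [S] if the infimum were not attained, hence bounded, which
   contradicts [m] being the infimum. *)
Lemma closed_in_box_min_attained n M (S : vec n -> Prop) (F : vec n -> R) :
  (forall z, S z -> box n M z) ->
  (forall z, ~ S z -> exists r, 0 < r /\ forall z', norm (vsub z' z) < r -> ~ S z') ->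
  (forall z, contv F z) -> (exists z, S z) ->
  exists w, S w /\ forall v, S v -> F w <= F v.
Proof.
  intros HSbox HSclosed HF Hne.
  destruct (compact_bounded _ _ F (compact_box n M))
    as [CF HCF]; [intros z; apply contv_locally_bounded, HF|].
  destruct (bounded_below_inf S F (- CF)) as [m [Hm1 Hm2]]; [|eauto|].
  { intros z Hz. destruct (Rabs_le_bounds _ _ (HCF z (HSbox z Hz))). lra. }
  apply NNPP. intros Hn.
  assert (Hgt : forall w, S w -> m < F w).
  { intros w Hw. destruct (Rle_lt_or_eq_dec _ _ (Hm1 w Hw)) as [H|H]; auto.
    exfalso. apply Hn. exists w. split; auto. intros v Hv. rewrite <- H. auto. }
  destruct (compact_box n M (fun A => exists C, forall z, A z -> S z -> / (F z - m) <= C))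
    as [C HC].
  - intros A0 B0 [C1 H1] [C2 H2]. exists (Rmax C1 C2). intros z [Ha|Hb'] Hk.
    + eapply Rle_trans; [apply H1; auto| apply Rmax_l].
    + eapply Rle_trans; [apply H2; auto| apply Rmax_r].
  - intros A0 B0 HAB [C H]. exists C; auto.
  - intros z. destruct (classic (S z)) as [Hk|Hk].
    + pose proof (Hgt z Hk). destruct (HF z ((F z - m)/2)) as [r [Hr Hr']]. lra.
      exists r. split; auto. exists (2 / (F z - m)). intros z' Hz' _.
      destruct (Rabs_le_bounds (F z' - F z) ((F z - m)/2)) as [Hl _].
      { left. apply Hr'. exact Hz'. }
      apply Rle_trans with (/ ((F z - m) / 2)).
      * apply Rinv_le_contravar; lra.
      * right. field. lra.
    + destruct (HSclosed z Hk) as [r [Hr Hr']]. exists r. split; auto.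
      exists 0. intros z' Hz' Hk'. exfalso. exact (Hr' z' Hz' Hk').
  - destruct (Hm2 (/ (Rabs C + 1))) as [w [Hw Hq]].
    { apply Rinv_0_lt_compat. pose proof (Rabs_pos C); lra. }
    specialize (HC w (HSbox w Hw) Hw). pose proof (Hgt w Hw).
    pose proof (Rabs_pos C). pose proof (Rle_abs C).
    assert (Rabs C + 1 < / (F w - m)); [|lra].
    rewrite <- (Rinv_inv (Rabs C + 1)). apply Rinv_lt_contravar; [|lra].
    apply Rmult_lt_0_compat. lra. apply Rinv_0_lt_compat; lra.
Qed.

(** * Derivatives *)

Lemma derivable_pt_lim_approx f t l : derivable_pt_lim f t l ->
  forall eps, 0 < eps -> exists d, 0 < d /\ forall s, Rabs s < d ->
    Rabs (f (t + s) - f t - s * l) <= eps * Rabs s.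
Proof.
  intros H eps Heps. destruct (H eps Heps) as [d Hd]. exists d. split. apply cond_pos.
  intros s Hs. destruct (Req_dec s 0) as [E|E].
  - subst. rewrite Rplus_0_r. replace (f t - f t - 0 * l) with 0 by lra. rewrite Rabs_R0. lra.
  - specialize (Hd s E Hs).
    replace (f (t + s) - f t - s * l) with (s * ((f (t + s) - f t) / s - l)) by (field; auto).
    rewrite Rabs_mult, Rmult_comm. apply Rmult_le_compat_r. apply Rabs_pos. lra.
Qed.

Lemma approx_derivable_pt_lim f t l :
  (forall eps, 0 < eps -> exists d, 0 < d /\ forall s, Rabs s < d ->
    Rabs (f (t + s) - f t - s * l) <= eps * Rabs s) -> derivable_pt_lim f t l.
Proof.
  intros H eps Heps. destruct (H (eps/2)) as [d [Hd H1]]. lra.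
  exists (mkposreal d Hd). intros s Hs0 Hs. simpl in Hs. specialize (H1 s Hs).
  replace ((f (t + s) - f t) / s - l) with ((f (t + s) - f t - s * l) / s) by (field; auto).
  unfold Rdiv. rewrite Rabs_mult, Rabs_inv. pose proof (Rabs_pos_lt s Hs0).
  apply (Rmult_lt_reg_r (Rabs s)); auto. rewrite Rmult_assoc, Rinv_l by lra. nra.
Qed.

Lemma fin_min_radius n (Q : Fin.t n -> R -> Prop) :
  (forall k, exists d, 0 < d /\ forall s, Rabs s < d -> Q k s) ->
  exists d, 0 < d /\ forall s, Rabs s < d -> forall k, Q k s.
Proof.
  induction n; intros H.
  - exists 1. split. lra. intros s _ k. inversion k.
  - destruct (IHn (fun k s => Q (Fin.FS k) s)) as [d1 [Hd1 H1]]. { intros k; apply H. }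
    destruct (H Fin.F1) as [d0 [Hd0 H0]].
    exists (Rmin d0 d1). split. apply Rmin_pos; auto.
    intros s Hs k. pose proof (Rmin_l d0 d1). pose proof (Rmin_r d0 d1).
    apply (Fin.caseS' k).
    + apply H0. lra.
    + intros p. apply H1. lra.
Qed.

Lemma vderiv_approx n (z : R -> vec n) t d : vderiv z t d ->
  forall eps, 0 < eps -> exists del, 0 < del /\ forall s, Rabs s < del -> forall k,
    Rabs (z (t + s) k - z t k - s * d k) <= eps * Rabs s.
Proof.
  intros H eps Heps.
  apply (fin_min_radius n (fun k s => Rabs (z (t + s) k - z t k - s * d k) <= eps * Rabs s)).
  intros k. apply (derivable_pt_lim_approx (fun s => z s k)); auto.
Qed.

Lemma vderiv_increment_le n (z : R -> vec n) t d : vderiv z t d ->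
  exists r, 0 < r /\ forall s, Rabs s < r ->
    norm (vsub (z (t + s)) (z t)) <= Rabs s * fsum n (fun k => Rabs (d k) + 1).
Proof.
  intros D. destruct (vderiv_approx _ _ _ _ D 1 Rlt_0_1) as [r [Hr H]].
  exists r. split; auto. intros s Hs.
  eapply Rle_trans. apply norm_le_sum_Rabs. rewrite <- fsum_scal. apply fsum_le.
  intros k. specialize (H s Hs k). unfold vsub. pose proof (Rabs_pos s).
  pose proof (Rabs_triang (z (t + s) k - z t k - s * d k) (s * d k)).
  replace (z (t + s) k - z t k - s * d k + s * d k) with (z (t + s) k - z t k) in H1 by ring.
  rewrite Rabs_mult in H1. pose proof (Rabs_pos (d k)). nra.
Qed.

Lemma vderiv_dot_approx n (G : vec n) (z : R -> vec n) t d : vderiv z t d ->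
  forall eps, 0 < eps -> exists r, 0 < r /\ forall s, Rabs s < r ->
    Rabs (dot G (vsub (z (t + s)) (z t)) - s * dot G d) <= eps * Rabs s.
Proof.
  intros D eps Heps. set (Gs := fsum n (fun k => Rabs (G k)) + 1).
  assert (HGs : 1 <= Gs)
    by (pose proof (fsum_nonneg n _ (fun k => Rabs_pos (G k))); unfold Gs; lra).
  destruct (vderiv_approx _ _ _ _ D (eps / Gs)) as [r [Hr H]].
  { apply Rdiv_lt_0_compat; lra. }
  exists r. split; auto. intros s Hs.
  replace (dot G (vsub (z (t + s)) (z t)) - s * dot G d)
    with (dot G (fun k => z (t + s) k - z t k - s * d k))
    by (unfold dot, vsub; rewrite <- fsum_scal, <- fsum_minus; apply fsum_ext; intros; ring).
  eapply Rle_trans. apply Rabs_dot_le. apply (H s Hs).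
  pose proof (Rabs_pos s). pose proof (fsum_nonneg n _ (fun k => Rabs_pos (G k))).
  apply Rle_trans with (Gs * (eps / Gs * Rabs s)).
  - apply Rmult_le_compat_r. apply Rmult_le_pos; [left; apply Rdiv_lt_0_compat|]; lra.
    unfold Gs; lra.
  - right. field. lra.
Qed.

Lemma chain_rule2 n m (F : vec n -> vec m -> R) (c : vec n) (c' : vec m)
  (G1 : vec n) (G2 : vec m) (z1 : R -> vec n) (z2 : R -> vec m) t d1 d2 :
  (forall eps, 0 < eps -> exists del, 0 < del /\ forall a b, norm a + norm b < del ->
     Rabs (F (vadd c a) (vadd c' b) - F c c' - dot G1 a - dot G2 b)
       <= eps * (norm a + norm b)) ->
  z1 t = c -> z2 t = c' -> vderiv z1 t d1 -> vderiv z2 t d2 ->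
  derivable_pt_lim (fun s => F (z1 s) (z2 s)) t (dot G1 d1 + dot G2 d2).
Proof.
  intros HF E1 E2 D1 D2. subst c c'. apply approx_derivable_pt_lim. intros eps Heps.
  destruct (vderiv_increment_le _ _ _ _ D1) as [r1 [Hr1 N1]].
  destruct (vderiv_increment_le _ _ _ _ D2) as [r2 [Hr2 N2]].
  set (A := fsum n (fun k => Rabs (d1 k) + 1) + fsum m (fun k => Rabs (d2 k) + 1) + 1).
  assert (HA : 1 <= A).
  { pose proof (fsum_nonneg n (fun k => Rabs (d1 k) + 1)
                  (fun k => ltac:(pose proof (Rabs_pos (d1 k)); lra))).
    pose proof (fsum_nonneg m (fun k => Rabs (d2 k) + 1)
                  (fun k => ltac:(pose proof (Rabs_pos (d2 k)); lra))).
    unfold A; lra. }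
  destruct (HF (eps / (2 * A))) as [del [Hdel HF1]]. { apply Rdiv_lt_0_compat; lra. }
  destruct (vderiv_dot_approx _ G1 _ _ _ D1 (eps / 4)) as [r3 [Hr3 Q1]]. lra.
  destruct (vderiv_dot_approx _ G2 _ _ _ D2 (eps / 4)) as [r4 [Hr4 Q2]]. lra.
  exists (Rmin r1 (Rmin r2 (Rmin r3 (Rmin r4 (del / A))))). split.
  { repeat apply Rmin_pos; auto. apply Rdiv_lt_0_compat; lra. }
  intros s Hs.
  apply Rmin_Rgt_l in Hs as [Hs1 Hs]. apply Rmin_Rgt_l in Hs as [Hs2 Hs].
  apply Rmin_Rgt_l in Hs as [Hs3 Hs]. apply Rmin_Rgt_l in Hs as [Hs4 Hs].
  specialize (N1 s Hs1). specialize (N2 s Hs2). specialize (Q1 s Hs3). specialize (Q2 s Hs4).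
  set (a := vsub (z1 (t + s)) (z1 t)) in *. set (b := vsub (z2 (t + s)) (z2 t)) in *.
  pose proof (Rabs_pos s). pose proof (norm_nonneg _ a). pose proof (norm_nonneg _ b).
  assert (Hab : norm a + norm b <= Rabs s * A) by (unfold A; nra).
  assert (Hs' : Rabs s * A < del).
  { apply (Rmult_lt_reg_r (/ A)). apply Rinv_0_lt_compat; lra.
    rewrite Rmult_assoc, Rinv_r by lra. lra. }
  specialize (HF1 a b ltac:(lra)). unfold a, b in HF1. rewrite !vadd_vsub in HF1. fold a b in HF1.
  assert (eps / (2 * A) * (norm a + norm b) <= eps / 2 * Rabs s).
  { apply Rle_trans with (eps / (2 * A) * (Rabs s * A)).
    - apply Rmult_le_compat_l; [|lra]. left; apply Rdiv_lt_0_compat; lra.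
    - right. field. lra. }
  replace (F (z1 (t + s)) (z2 (t + s)) - F (z1 t) (z2 t) - s * (dot G1 d1 + dot G2 d2))
    with ((F (z1 (t + s)) (z2 (t + s)) - F (z1 t) (z2 t) - dot G1 a - dot G2 b)
          + (dot G1 a - s * dot G1 d1) + (dot G2 b - s * dot G2 d2)) by ring.
  eapply Rle_trans. apply Rabs_triang.
  eapply Rle_trans. apply Rplus_le_compat_r. apply Rabs_triang.
  lra.
Qed.

Lemma chain_rule1 n (F : vec n -> R) (c : vec n) (G : vec n) (z : R -> vec n) t d :
  (forall eps, 0 < eps -> exists del, 0 < del /\ forall a, norm a < del ->
     Rabs (F (vadd c a) - F c - dot G a) <= eps * norm a) ->
  z t = c -> vderiv z t d ->
  derivable_pt_lim (fun s => F (z s)) t (dot G d).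
Proof.
  intros HF E D.
  replace (dot G d) with (dot G d + dot (fun _ : Fin.t 0 => 0) (fun _ => 0))
    by (unfold dot; simpl; ring).
  apply (chain_rule2 n 0 (fun z _ => F z) c (fun _ => 0) G (fun _ => 0) z (fun _ _ => 0));
    auto.
  - intros eps Heps. destruct (HF eps Heps) as [del [Hd HH]]. exists del; split; auto.
    intros a b Hab. rewrite norm_vec0 in *. unfold dot at 2; simpl.
    rewrite Rplus_0_r in *. rewrite Rminus_0_r. auto.
  - intros k. inversion k.
Qed.

Lemma fsum_derivable_pt_lim n (F : Fin.t n -> R -> R) (D : Fin.t n -> R) t :
  (forall j, derivable_pt_lim (F j) t (D j)) ->
  derivable_pt_lim (fun s => fsum n (fun j => F j s)) t (fsum n D).
Proof.
  induction n; intros H; simpl.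
  - apply derivable_pt_lim_const.
  - apply (derivable_pt_lim_plus (F Fin.F1) (fun s => fsum n (fun j => F (Fin.FS j) s))).
    + apply H.
    + apply (IHn (fun j => F (Fin.FS j)) (fun j => D (Fin.FS j))). intros; apply H.
Qed.

(* The derivative is only assumed to exist (not to be a function), so the
   mean value theorem is applied to a chosen derivative. *)
Lemma mvt_with_property (F : R -> R) (P : R -> Prop) a' a b b' :
  a' < a -> a < b -> b < b' ->
  (forall s, a' < s < b' -> exists D, derivable_pt_lim F s D /\ P D) ->
  exists D, P D /\ F b - F a = D * (b - a).
Proof.
  intros H1 H2 H3 H.
  set (F' := fun s => epsilon (inhabits 0) (fun D => derivable_pt_lim F s D /\ P D)).
  assert (HF' : forall s, a' < s < b' -> derivable_pt_lim F s (F' s) /\ P (F' s)).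
  { intros s Hs. apply (epsilon_spec (inhabits 0) (fun D => derivable_pt_lim F s D /\ P D)).
    auto. }
  destruct (MVT_cor2 F F' a b H2) as [c [Hc1 Hc2]].
  { intros c Hc. apply HF'. lra. }
  exists (F' c). split. apply HF'; lra. lra.
Qed.

Lemma deriv_le_increment_le (F : R -> R) a' a b b' k :
  a' < a -> a <= b -> b < b' ->
  (forall s, a' < s < b' -> exists D, derivable_pt_lim F s D /\ D <= - k) ->
  F b - F a <= - k * (b - a).
Proof.
  intros H1 H2 H3 H. destruct (Req_dec a b). { subst. lra. }
  destruct (mvt_with_property F (fun D => D <= -k) a' a b b') as [D [HD E]]; auto. lra.
  rewrite E. apply Rmult_le_compat_r; lra.
Qed.

Lemma deriv_bounded_lipschitz (F : R -> R) a' a b b' K :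
  a' < a -> a <= b -> b < b' ->
  (forall s, a' < s < b' -> exists D, derivable_pt_lim F s D /\ Rabs D <= K) ->
  Rabs (F b - F a) <= K * (b - a).
Proof.
  intros H1 H2 H3 H. destruct (Req_dec a b).
  { subst. replace (F b - F b) with 0 by ring. rewrite Rabs_R0; lra. }
  destruct (mvt_with_property F (fun D => Rabs D <= K) a' a b b') as [D [HD E]]; auto. lra.
  rewrite E, Rabs_mult, (Rabs_right (b - a)) by lra.
  apply Rmult_le_compat_r; lra.
Qed.

(* If [g t >= e] then [g >= e/2] on a
   window of fixed length [del] around [t], so [V] drops by a fixed amount
   [kap]; infinitely many such drops would make [V] negative. *)
Lemma lyapunov_rate_vanishes (V g : R -> R) :
  (forall t, 0 <= V t) ->
  (forall t, 0 <= g t) ->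
  (forall t, 0 < t -> exists D, derivable_pt_lim V t D /\ D <= - g t) ->
  (exists K, 0 < K /\ forall s1 s2, 0 < s1 -> s1 <= s2 -> Rabs (g s2 - g s1) <= K * (s2 - s1)) ->
  forall e, 0 < e -> exists T, forall t, T <= t -> g t < e.
Proof.
  intros HV0 Hg0 HV [K [HK Hlip]] e He.
  set (del := e / (4 * K)). assert (Hdel : 0 < del) by (unfold del; apply Rdiv_lt_0_compat; lra).
  assert (HKd : K * del = e / 4) by (unfold del; field; lra).
  set (kap := e / 2 * del). assert (Hk : 0 < kap) by (unfold kap; nra).
  assert (Hdecr : forall s1 s2, 0 < s1 -> s1 <= s2 -> V s2 <= V s1).
  { intros s1 s2 H1 H2.
    assert (V s2 - V s1 <= - 0 * (s2 - s1)); [|lra].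
    apply (deriv_le_increment_le V (s1 / 2) s1 s2 (s2 + 1) 0); try lra.
    intros s Hs. destruct (HV s ltac:(lra)) as [D [HD HD']]. exists D. split; auto.
    pose proof (Hg0 s). lra. }
  assert (Hdrop : forall t, del < t -> e <= g t -> V (t + del) <= V t - kap).
  { intros t Ht Hg.
    assert (V (t + del) - V t <= - (e / 2) * (t + del - t)).
    { apply (deriv_le_increment_le V (t - del) t (t + del) (t + 2 * del)); try lra.
      intros s Hs. destruct (HV s ltac:(lra)) as [D [HD HD']]. exists D. split; auto.
      assert (e / 2 <= g s); [|lra].
      destruct (Rle_or_lt s t).
      - destruct (Rabs_le_bounds _ _ (Hlip s t ltac:(lra) H)). nra.
      - destruct (Rabs_le_bounds _ _ (Hlip t s ltac:(lra) ltac:(lra))). nra. }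
    unfold kap. replace (t + del - t) with del in H by ring. lra. }
  apply NNPP. intros Hn.
  assert (Hinf : forall T, exists t, T <= t /\ e <= g t).
  { intros T. apply NNPP. intros Hn2. apply Hn. exists T. intros t Ht.
    destruct (Rlt_or_le (g t) e); auto. exfalso. apply Hn2. eauto. }
  assert (Hind : forall m, exists t, 1 <= t /\ V t <= V 1 - INR m * kap).
  { induction m.
    - exists 1. simpl. lra.
    - destruct IHm as [t [Ht HVt]]. destruct (Hinf (t + del + 1)) as [t' [Ht' Hg]].
      pose proof (Hdecr t t' ltac:(lra) ltac:(lra)). pose proof (Hdrop t' ltac:(lra) Hg).
      exists (t' + del). split. lra. rewrite S_INR. lra. }
  destruct (INR_unbounded (V 1 / kap)) as [m Hm].
  destruct (Hind m) as [t [_ Ht]]. pose proof (HV0 t).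
  assert (INR m * kap > V 1); [|lra].
  apply (Rmult_lt_reg_r (/ kap)). apply Rinv_0_lt_compat; auto.
  rewrite Rmult_assoc, Rinv_r by lra. unfold Rdiv in Hm. lra.
Qed.

(** * The incidence matrix and the Laplacian *)

Lemma fin_lt_irrefl N (i : Fin.t N) : ~ fin_lt i i.
Proof. unfold fin_lt. lia. Qed.

Lemma fin_lt_dec {N} (i j : Fin.t N) : {fin_lt i j} + {~ fin_lt i j}.
Proof. unfold fin_lt. apply Compare_dec.lt_dec. Qed.

Lemma fin_lt_asym N (i j : Fin.t N) : fin_lt i j -> ~ fin_lt j i.
Proof. unfold fin_lt. lia. Qed.

Lemma fin_lt_total N (i j : Fin.t N) : ~ fin_lt i j -> ~ fin_lt j i -> i = j.
Proof. unfold fin_lt. intros H1 H2. apply Fin.to_nat_inj. lia. Qed.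

Definition trmul {N E} (B : mat N E) (z : vec N) (g : Fin.t E) : R :=
  fsum N (fun j => B j g * z j).

Lemma trmul_lin {N E} (B : mat N E) z w c g :
  trmul B (fun k => z k + c * w k) g = trmul B z g + c * trmul B w g.
Proof. unfold trmul. rewrite <- fsum_scal, <- fsum_plus. apply fsum_ext. intros; ring. Qed.

Section Incidence.
Variables (N E : nat) (a : Fin.t N -> Fin.t N -> R) (edge : Fin.t E -> Fin.t N * Fin.t N).
Hypothesis Hadj : sym_nonneg_adj a.
Hypothesis Hedge : edge_enum a edge.

Let B := incidence a edge.

Lemma trmul_incidence z g :
  trmul B z g = sqrt (a (fst (edge g)) (snd (edge g))) * (z (snd (edge g)) - z (fst (edge g))).
Proof.
  destruct Hedge as [H1 _]. specialize (H1 g).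
  unfold trmul, B, incidence. destruct (edge g) as [i j]. simpl in *.
  destruct H1 as [Hlt _].
  assert (Hne : i <> j) by (intros <-; exact (fin_lt_irrefl _ _ Hlt)).
  rewrite (fsum_pair _ _ i j Hne).
  - destruct (Fin.eq_dec i i); [|congruence]. destruct (Fin.eq_dec j i); [congruence|].
    destruct (Fin.eq_dec j j); [|congruence]. ring.
  - intros k Hk1 Hk2.
    destruct (Fin.eq_dec k i); [congruence|]. destruct (Fin.eq_dec k j); [congruence|]. ring.
Qed.

Lemma trmul_incidence_const c g : trmul B (fun _ => c) g = 0.
Proof. rewrite trmul_incidence. ring. Qed.

Lemma incidence_col_sum g : fsum N (fun j => B j g) = 0.
Proof.
  rewrite <- (trmul_incidence_const 1 g). unfold trmul. apply fsum_ext. intros; ring.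
Qed.

Lemma trmul_incidence_eq0 w : (forall g, trmul B w g = 0) -> forall i k, 0 < a i k -> w i = w k.
Proof.
  intros Hz i k Hik. destruct Hedge as [H1 [_ H3]]. destruct Hadj as [_ Hsym].
  assert (Hg : forall g, w (fst (edge g)) = w (snd (edge g))).
  { intros g. specialize (Hz g). rewrite trmul_incidence in Hz.
    destruct (H1 g) as [_ Hp]. pose proof (sqrt_lt_R0 _ Hp).
    apply Rmult_integral in Hz. destruct Hz; lra. }
  destruct (fin_lt_dec i k) as [L1|L1]; [|destruct (fin_lt_dec k i) as [L2|L2]].
  - destruct (H3 i k L1 Hik) as [g Eg]. specialize (Hg g). rewrite Eg in Hg. auto.
  - rewrite Hsym in Hik. destruct (H3 k i L2 Hik) as [g Eg].
    specialize (Hg g). rewrite Eg in Hg. simpl in Hg. auto.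
  - rewrite (fin_lt_total _ _ _ L1 L2). auto.
Qed.

Lemma fsum_edges (F : Fin.t N -> Fin.t N -> R) :
  (forall i j, F i j <> 0 -> exists g, edge g = (i, j)) ->
  fsum E (fun g => F (fst (edge g)) (snd (edge g))) = fsum N (fun i => fsum N (fun j => F i j)).
Proof.
  intros Him. destruct Hedge as [_ [Hinj _]].
  set (X := fun i j g => if Fin.eq_dec i (fst (edge g))
                         then if Fin.eq_dec j (snd (edge g)) then F i j else 0 else 0).
  transitivity (fsum N (fun i => fsum N (fun j => fsum E (fun g => X i j g)))).
  - symmetry. rewrite fsum_swap3. apply fsum_ext. intros g. rewrite fsum_swap.
    rewrite (fsum_single _ _ (fst (edge g))).
    + rewrite (fsum_single _ _ (snd (edge g))).
      * unfold X. destruct (Fin.eq_dec _ _); [|congruence]. destruct (Fin.eq_dec _ _); congruence.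
      * intros j Hj. unfold X. destruct (Fin.eq_dec _ _); [|auto]. destruct (Fin.eq_dec _ _); congruence.
    + intros i Hi. apply fsum_zero. intros j. unfold X. destruct (Fin.eq_dec _ _); congruence.
  - apply fsum_ext; intros i. apply fsum_ext; intros j.
    destruct (Req_dec (F i j) 0) as [Z|Z].
    + rewrite Z. apply fsum_zero. intros g. unfold X.
      destruct (Fin.eq_dec _ _); auto. destruct (Fin.eq_dec _ _); auto.
    + destruct (Him i j Z) as [g0 Hg0]. rewrite (fsum_single _ _ g0).
      * unfold X. rewrite Hg0. simpl.
        destruct (Fin.eq_dec i i); [|congruence]. destruct (Fin.eq_dec j j); congruence.
      * intros g Hg. unfold X. destruct (Fin.eq_dec _ _); auto. destruct (Fin.eq_dec _ _); auto.
        exfalso. apply Hg. apply Hinj. rewrite Hg0. destruct (edge g); simpl in *; subst; auto.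
Qed.

Let P (z w : vec N) (i j : Fin.t N) : R := a i j * (z j - z i) * (w j - w i).

Lemma incidence_bilinear_half z w :
  fsum E (fun g => trmul B z g * trmul B w g) =
  fsum N (fun i => fsum N (fun j => if fin_lt_dec i j then P z w i j else 0)).
Proof.
  rewrite <- fsum_edges.
  - apply fsum_ext. intros g. rewrite !trmul_incidence.
    destruct Hedge as [H1 _]. destruct (H1 g) as [Hlt Hpos].
    destruct (fin_lt_dec _ _); [|contradiction]. unfold P.
    pose proof (sqrt_sqrt (a (fst (edge g)) (snd (edge g))) ltac:(lra)). nra.
  - intros i j Hne. destruct (fin_lt_dec i j) as [Hl|Hl]; [|congruence].
    destruct Hedge as [_ [_ H3]]. apply H3; auto. unfold P in Hne.
    destruct Hadj as [Hnn _]. destruct (Hnn i j); auto.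
    exfalso; apply Hne. rewrite <- H. ring.
Qed.

Lemma fsum_pairs_half z w :
  fsum N (fun i => fsum N (fun j => P z w i j)) =
  2 * fsum N (fun i => fsum N (fun j => if fin_lt_dec i j then P z w i j else 0)).
Proof.
  destruct Hadj as [_ Hsym].
  set (U := fun i j => if fin_lt_dec i j then P z w i j else 0).
  transitivity (fsum N (fun i => fsum N (fun j => U i j + U j i))).
  - apply fsum_ext; intros i; apply fsum_ext; intros j. unfold U, P.
    destruct (fin_lt_dec i j) as [H1|H1]; destruct (fin_lt_dec j i) as [H2|H2].
    + exfalso. exact (fin_lt_asym _ _ _ H1 H2).
    + ring.
    + rewrite Hsym. ring.
    + rewrite (fin_lt_total _ _ _ H1 H2). ring.
  - rewrite (fsum_ext N _ (fun i => fsum N (fun j => U i j) + fsum N (fun j => U j i)))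
      by (intros; apply fsum_plus).
    rewrite fsum_plus, (fsum_swap N N (fun i j => U j i)).
    change (fsum N (fun i => fsum N (fun j => U i j)) + fsum N (fun i => fsum N (fun j => U i j))
            = 2 * fsum N (fun i => fsum N (fun j => U i j))). ring.
Qed.

Lemma laplacian_apply w i :
  mvmul (laplacian a) w i = fsum N (fun k => a i k) * w i - fsum N (fun j => a i j * w j).
Proof.
  unfold mvmul, laplacian.
  rewrite (fsum_ext _ _ (fun k => (if Fin.eq_dec i k then fsum N (fun k0 => a i k0) * w k else 0)
                                - a i k * w k))
    by (intros k; destruct (Fin.eq_dec i k); ring).
  rewrite fsum_minus, (fsum_single _ _ i).
  - destruct (Fin.eq_dec i i); [|congruence]. reflexivity.
  - intros j Hj. destruct (Fin.eq_dec i j); congruence.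
Qed.

Lemma fsum_pairs_laplacian z w :
  fsum N (fun i => fsum N (fun j => P z w i j)) =
  2 * fsum N (fun i => z i * mvmul (laplacian a) w i).
Proof.
  destruct Hadj as [_ Hsym]. unfold P.
  rewrite (fsum_ext N _ (fun i => fsum N (fun j => a i j * z j * w j)
          - fsum N (fun j => a i j * z j * w i) - fsum N (fun j => a i j * z i * w j)
          + fsum N (fun j => a i j * z i * w i))).
  2:{ intros i. rewrite <- !fsum_minus, <- fsum_plus. apply fsum_ext. intros; ring. }
  rewrite fsum_plus, !fsum_minus.
  rewrite (fsum_swap N N (fun i j => a i j * z j * w j)),
          (fsum_swap N N (fun i j => a i j * z j * w i)).
  rewrite (fsum_ext N (fun j => fsum N (fun i => a i j * z j * w j))
                      (fun i => fsum N (fun j => a i j * z i * w i)))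
    by (intros i; apply fsum_ext; intros j; rewrite Hsym; ring).
  rewrite (fsum_ext N (fun j => fsum N (fun i => a i j * z j * w i))
                      (fun i => fsum N (fun j => a i j * z i * w j)))
    by (intros i; apply fsum_ext; intros j; rewrite Hsym; ring).
  rewrite <- fsum_scal.
  rewrite (fsum_ext N (fun i => 2 * (z i * mvmul (laplacian a) w i))
     (fun i => 2 * fsum N (fun j => a i j * z i * w i) - 2 * fsum N (fun j => a i j * z i * w j))).
  2:{ intros i. rewrite laplacian_apply.
      rewrite (fsum_ext N (fun j => a i j * z i * w i) (fun j => a i j * (z i * w i)))
        by (intros; ring).
      rewrite (fsum_ext N (fun j => a i j * z i * w j) (fun j => z i * (a i j * w j)))
        by (intros; ring).
      rewrite (fsum_scalr N (z i * w i) (fun j => a i j)),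
              (fsum_scal N (z i) (fun j => a i j * w j)). ring. }
  rewrite fsum_minus, !fsum_scal. ring.
Qed.

Lemma incidence_bilinear_laplacian z w :
  fsum E (fun g => trmul B z g * trmul B w g) = fsum N (fun i => z i * mvmul (laplacian a) w i).
Proof.
  rewrite incidence_bilinear_half.
  pose proof (fsum_pairs_half z w). pose proof (fsum_pairs_laplacian z w). lra.
Qed.

End Incidence.

(** * The algebraic connectivity bound *)

Lemma quadratic_nonneg_linear_coeff b c : (forall t, 0 <= 2 * t * b + t * t * c) -> b = 0.
Proof.
  intros H. destruct (Req_dec b 0) as [|Hb0]; auto. exfalso.
  set (t := - b / (Rabs c + 1)). specialize (H t). pose proof (Rabs_pos c).
  pose proof (Rle_abs c).
  assert (Ht : t * (Rabs c + 1) = - b) by (unfold t; field; lra).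
  assert (t <> 0) by (intro E; rewrite E in Ht; lra).
  assert (0 < t * t) by nra.
  assert (t * t * (Rabs c + 1) = - b * t) by (rewrite <- Ht; ring).
  nra.
Qed.

Lemma dot_lin_sqr n (w z : vec n) t :
  dot (fun k => w k + t * z k) (fun k => w k + t * z k) = dot w w + 2 * t * dot w z + t * t * dot z z.
Proof.
  unfold dot. rewrite (fsum_ext n _ (fun k => w k * w k + (2 * t * (w k * z k) + t * t * (z k * z k))))
    by (intros; ring).
  rewrite !fsum_plus, !fsum_scal. ring.
Qed.

Lemma fin_card_pos n (k : Fin.t n) : (0 < n)%nat.
Proof. destruct k; lia. Qed.

Section Spectral.
Variables (N E : nat) (a : Fin.t N -> Fin.t N -> R) (edge : Fin.t E -> Fin.t N * Fin.t N)
  (lam2 : R).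
Hypothesis Hadj : sym_nonneg_adj a.
Hypothesis Hcon : connected a.
Hypothesis Hedge : edge_enum a edge.
Hypothesis Hlam : smallest_nonzero_eigenvalue (laplacian a) lam2.

Let B := incidence a edge.

Definition edge_energy (z : vec N) := fsum E (fun g => trmul B z g * trmul B z g).
Definition unit_mean_zero (z : vec N) := dot z z = 1 /\ fsum N z = 0.

Lemma edge_energy_nonneg z : 0 <= edge_energy z.
Proof. apply fsum_nonneg. intros; apply Rle_0_sqr. Qed.

Lemma edge_energy_lin z w t : edge_energy (fun k => w k + t * z k) =
  edge_energy w + 2 * t * fsum E (fun g => trmul B w g * trmul B z g) + t * t * edge_energy z.
Proof.
  unfold edge_energy.
  rewrite (fsum_ext E _ (fun g => trmul B w g * trmul B w g + (2 * t * (trmul B w g * trmul B z g)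
                                 + t * t * (trmul B z g * trmul B z g))))
    by (intros g; rewrite trmul_lin; ring).
  rewrite !fsum_plus, !fsum_scal. ring.
Qed.

Lemma edge_energy_cont z : contv edge_energy z.
Proof.
  apply contv_fsum. intros g.
  apply contv_mult; unfold trmul; apply contv_fsum; intros j;
    apply contv_mult; first [apply contv_const | apply contv_coord].
Qed.

Lemma unit_mean_zero_min :
  (exists w, unit_mean_zero w) ->
  exists w, unit_mean_zero w /\ forall v, unit_mean_zero v -> edge_energy w <= edge_energy v.
Proof.
  apply (closed_in_box_min_attained N 1).
  - intros z [H _]. apply box_of_norm. unfold norm. rewrite H, sqrt_1. lra.
  - intros z Hz. apply not_and_or in Hz. destruct Hz as [Hz|Hz].
    + assert (Hc : contv (fun v : vec N => dot v v) z)
        by (apply contv_fsum; intros; apply contv_mult; apply contv_coord).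
      destruct (contv_neq_nbhd _ _ _ _ Hc Hz) as [r [Hr Hr']].
      exists r. split; auto. intros z' Hz' [H _]. exact (Hr' z' Hz' H).
    + assert (Hc : contv (fun v : vec N => fsum N v) z)
        by (apply (contv_fsum N N (fun j v => v j)); intros; apply contv_coord).
      destruct (contv_neq_nbhd _ _ _ _ Hc Hz) as [r [Hr Hr']].
      exists r. split; auto. intros z' Hz' [_ H]. exact (Hr' z' Hz' H).
  - exact edge_energy_cont.
Qed.

Lemma unit_mean_zero_normalize z : fsum N z = 0 -> dot z z <> 0 ->
  unit_mean_zero (fun k => / sqrt (dot z z) * z k) /\
  edge_energy (fun k => / sqrt (dot z z) * z k) * dot z z = edge_energy z.
Proof.
  intros H0 Hd. pose proof (dot_self_nonneg N z).
  assert (Hs : 0 < sqrt (dot z z)) by (apply sqrt_lt_R0; lra).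
  pose proof (sqrt_sqrt (dot z z) H) as Hsq.
  assert (Escal : forall c, edge_energy (fun k => c * z k) = c * c * edge_energy z).
  { intros c. unfold edge_energy. rewrite <- fsum_scal. apply fsum_ext. intros g.
    replace (fun k => c * z k) with (fun k => 0 + c * z k)
      by (apply functional_extensionality; intros; ring).
    rewrite trmul_lin. unfold trmul. rewrite fsum_zero by (intros; ring). ring. }
  split; [split|].
  - unfold dot at 1.
    rewrite (fsum_ext N _ (fun k => (/ sqrt (dot z z) * / sqrt (dot z z)) * (z k * z k)))
      by (intros; ring).
    rewrite fsum_scal. change (fsum N (fun k => z k * z k)) with (dot z z).
    rewrite <- Rinv_mult, Hsq. field. lra.
  - rewrite fsum_scal, H0. ring.
  - rewrite Escal. rewrite <- Hsq at 3. field. lra.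
Qed.

Lemma edge_energy_min_lower w :
  unit_mean_zero w -> (forall v, unit_mean_zero v -> edge_energy w <= edge_energy v) ->
  forall v, fsum N v = 0 -> edge_energy w * dot v v <= edge_energy v.
Proof.
  intros Hw Hmin v Hv. destruct (Req_dec (dot v v) 0) as [E0|E0].
  - rewrite E0. pose proof (edge_energy_nonneg v). lra.
  - destruct (unit_mean_zero_normalize v Hv E0) as [Hk Hq]. specialize (Hmin _ Hk).
    rewrite <- Hq. apply Rmult_le_compat_r. apply dot_self_nonneg. auto.
Qed.

(* Lagrange multiplier rule: the first variation of [edge_energy - mu |.|^2]
   in every mean-zero direction vanishes, and the residual [L w - mu w] is
   itself mean-zero. *)
Lemma edge_energy_min_eigenvector w :
  unit_mean_zero w -> (forall v, unit_mean_zero v -> edge_energy w <= edge_energy v) ->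
  mvmul (laplacian a) w = vscale (edge_energy w) w.
Proof.
  intros Hw Hmin. set (mu := edge_energy w).
  assert (Hfirst : forall z, fsum N z = 0 ->
            fsum E (fun g => trmul B w g * trmul B z g) - mu * dot w z = 0).
  { intros z Hz.
    apply (quadratic_nonneg_linear_coeff _ (edge_energy z - mu * dot z z)). intros t.
    assert (fsum N (fun k => w k + t * z k) = 0).
    { rewrite fsum_plus, fsum_scal. destruct Hw as [_ Hw]. rewrite Hw, Hz. ring. }
    pose proof (edge_energy_min_lower w Hw Hmin _ H) as Hl.
    rewrite edge_energy_lin, dot_lin_sqr in Hl.
    destruct Hw as [Hw1 _]. rewrite Hw1 in Hl. unfold mu. nra. }
  set (r := fun i => mvmul (laplacian a) w i - mu * w i).
  assert (Hr : fsum N r = 0).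
  { unfold r. rewrite fsum_minus, fsum_scal. destruct Hw as [_ Hw]. rewrite Hw.
    pose proof (incidence_bilinear_laplacian N E a edge Hadj Hedge (fun _ => 1) w) as HL.
    rewrite (fsum_zero E) in HL
      by (intros g; rewrite (trmul_incidence_const N E a edge Hedge); ring).
    rewrite (fsum_ext N _ (fun i => 1 * mvmul (laplacian a) w i)) by (intros; ring). lra. }
  specialize (Hfirst r Hr).
  assert (Hrr : dot r r = 0).
  { rewrite <- Hfirst. rewrite (fsum_ext E _ (fun g => trmul B r g * trmul B w g)) by (intros; ring).
    unfold B. rewrite (incidence_bilinear_laplacian N E a edge Hadj Hedge r w).
    unfold dot. rewrite <- fsum_scal, <- fsum_minus. apply fsum_ext. intros i. unfold r. ring. }
  apply functional_extensionality. intros i.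
  pose proof (dot_eq0_vec N r Hrr i). unfold r in H. unfold vscale. fold mu. lra.
Qed.

Lemma edge_energy_unit_neq0 w : unit_mean_zero w -> edge_energy w <> 0.
Proof.
  intros [Hw1 Hw2] Hq.
  assert (Hb : forall g, trmul B w g = 0)
    by (intros g; exact (fsum_sqr_eq0 E (trmul B w) Hq g)).
  assert (Hr : forall i j, reach a i j -> w i = w j).
  { intros i j H. induction H; auto. rewrite <- IHreach.
    apply (trmul_incidence_eq0 N E a edge Hadj Hedge); auto. }
  assert (Hex : exists k, w k <> 0).
  { apply NNPP. intros Hn. assert (dot w w = 0); [|lra].
    unfold dot. apply fsum_zero. intros k.
    destruct (Req_dec (w k) 0) as [->|]; [ring|]. exfalso; apply Hn; eauto. }
  destruct Hex as [k Hk].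
  assert (fsum N w = INR N * w k).
  { rewrite <- fsum_const. apply fsum_ext. intros j. symmetry. apply Hr, Hcon. }
  pose proof (lt_0_INR _ (fin_card_pos _ k)). rewrite Hw2 in H. nra.
Qed.

(* Courant-Fischer for [lam2]: a minimiser of the Rayleigh quotient on the
   mean-zero vectors is an eigenvector with a nonzero eigenvalue. *)
Lemma algebraic_connectivity_bound z : fsum N z = 0 -> lam2 * dot z z <= edge_energy z.
Proof.
  intros Hz. destruct (classic (exists w, unit_mean_zero w)) as [Hex|Hnex].
  - destruct (unit_mean_zero_min Hex) as [w [Hw Hmin]].
    assert (lam2 <= edge_energy w).
    { destruct Hlam as [_ [_ H]]. apply H; [|apply edge_energy_unit_neq0; auto].
      exists w. split.
      + apply NNPP. intros Hn. destruct Hw as [Hw _].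
        assert (dot w w = 0); [|lra]. unfold dot. apply fsum_zero. intros k.
        destruct (Req_dec (w k) 0) as [->|]; [ring|]. exfalso; apply Hn; eauto.
      + apply edge_energy_min_eigenvector; auto. }
    pose proof (edge_energy_min_lower w Hw Hmin z Hz). pose proof (dot_self_nonneg N z).
    assert (lam2 * dot z z <= edge_energy w * dot z z) by (apply Rmult_le_compat_r; auto).
    lra.
  - destruct (Req_dec (dot z z) 0) as [E0|E0].
    + rewrite E0. pose proof (edge_energy_nonneg z). lra.
    + exfalso. apply Hnex. eexists. apply (unit_mean_zero_normalize z Hz E0).
Qed.

End Spectral.

Lemma fin_bound2 m1 m2 (F : Fin.t m1 -> Fin.t m2 -> R) :
  exists C, 0 <= C /\ forall i j, Rabs (F i j) <= C.
Proof.
  destruct (fin_uniform_bound m1 F (fun _ => True)) as [C [HC0 HC]].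
  - intros i. destruct (fin_uniform_bound m2 (fun j (_ : unit) => F i j) (fun _ => True))
      as [C [_ HC]].
    + intros j. exists (Rabs (F i j)). intros; lra.
    + exists C. intros j _. exact (HC j tt I).
  - exists C. split; auto.
Qed.

Lemma contv_bounded_on_box n (F : vec n -> R) :
  (forall z, contv F z) -> forall M, exists C, forall z, box n M z -> Rabs (F z) <= C.
Proof.
  intros HF M. apply (compact_bounded _ _ F (compact_box n M)).
  intros z. apply contv_locally_bounded, HF.
Qed.

Lemma bounded_on_boxes2 n m l (F : vec n -> vec m -> vec l) :
  (forall z w, exists r C, 0 < r /\ forall z' w',
     norm (vsub z' z) + norm (vsub w' w) < r -> norm (vsub (F z' w') (F z w)) <= C) ->
  forall M, exists C, 0 <= C /\ forall z w k, box n M z -> box m M w -> Rabs (F z w k) <= C.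
Proof.
  intros L M.
  destruct (fin_uniform_bound l (fun k (zw : vec n * vec m) => F (fst zw) (snd zw) k)
              (fun zw => box n M (fst zw) /\ box m M (snd zw))) as [C [HC0 HC]].
  - intros k. apply (compact_bounded _ _ _ (compact_box2 n m M)).
    intros [z w]. destruct (L z w) as [r [C [Hr HC]]]. exists (r / 2). split. lra.
    exists (Rabs (F z w k) + C). intros [z' w'] [H1 H2]. unfold ball in *. simpl in *.
    specialize (HC z' w' ltac:(lra)).
    pose proof (Rabs_coord_le_norm l (vsub (F z' w') (F z w)) k). unfold vsub at 1 in H.
    pose proof (Rabs_triang (F z' w' k - F z w k) (F z w k)).
    replace (F z' w' k - F z w k + F z w k) with (F z' w' k) in H0 by ring. lra.
  - exists C. split; auto. intros z w k Hz Hw. exact (HC k (z, w) (conj Hz Hw)).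
Qed.

Lemma loc_lipschitz2_bounded_on_boxes n m l (F : vec n -> vec m -> vec l) :
  loc_lipschitz2 F ->
  forall M, exists C, 0 <= C /\ forall z w k, box n M z -> box m M w -> Rabs (F z w k) <= C.
Proof.
  intros HF. apply bounded_on_boxes2. intros z w.
  destruct (HF z w) as [r [K [Hr HL]]]. exists r, (Rabs K * r). split; auto.
  intros z' w' Hzw.
  assert (Hzz : norm (vsub z z) + norm (vsub w w) < r) by (rewrite !norm_vsub_self; lra).
  specialize (HL z' w' z w Hzw Hzz).
  pose proof (norm_nonneg _ (vsub z' z)). pose proof (norm_nonneg _ (vsub w' w)).
  eapply Rle_trans; [exact HL|].
  apply Rle_trans with (Rabs K * (norm (vsub z' z) + norm (vsub w' w))).
  - apply Rmult_le_compat_r. lra. apply Rle_abs.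
  - apply Rmult_le_compat_l. apply Rabs_pos. lra.
Qed.

Lemma continuous2_bounded_on_boxes n m l (F : vec n -> vec m -> vec l) :
  continuous2 F ->
  forall M, exists C, 0 <= C /\ forall z w k, box n M z -> box m M w -> Rabs (F z w k) <= C.
Proof.
  intros HF. apply bounded_on_boxes2. intros z w.
  destruct (HF z w 1 Rlt_0_1) as [r [Hr H]]. exists r, 1. split; auto.
  intros z' w' Hzw. left. auto.
Qed.

Lemma frechet_coord_cont n l (h : vec n -> vec l) (Dh : vec n -> mat l n) :
  (forall x eps, 0 < eps -> exists del, 0 < del /\ forall v, norm v < del ->
     norm (vsub (vsub (h (vadd x v)) (h x)) (mvmul (Dh x) v)) <= eps * norm v) ->
  forall k z, contv (fun z => h z k) z.
Proof.
  intros HD k c eps Heps.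
  set (A := fsum n (fun m => Rabs (Dh c k m)) + 1).
  assert (HA : 1 <= A) by (pose proof (fsum_nonneg n _ (fun m => Rabs_pos (Dh c k m))); unfold A; lra).
  destruct (HD c 1 Rlt_0_1) as [del [Hd H]].
  exists (Rmin del (eps / (2 * A))). split.
  { apply Rmin_pos; auto. apply Rdiv_lt_0_compat; lra. }
  intros z Hz. pose proof (Rmin_l del (eps / (2 * A))). pose proof (Rmin_r del (eps / (2 * A))).
  specialize (H (vsub z c) ltac:(lra)). rewrite vadd_vsub in H.
  pose proof (Rabs_coord_le_norm l (vsub (vsub (h z) (h c)) (mvmul (Dh c) (vsub z c))) k) as Hk.
  pose proof (norm_nonneg _ (vsub z c)).
  assert (Hlin : Rabs (mvmul (Dh c) (vsub z c) k) <= fsum n (fun m => Rabs (Dh c k m)) * norm (vsub z c)).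
  { apply Rabs_dot_le. intros m. apply Rabs_coord_le_norm. }
  unfold vsub at 1 2 in Hk. set (X := mvmul (Dh c) (vsub z c) k) in *.
  pose proof (Rabs_triang (h z k - h c k - X) X).
  replace (h z k - h c k - X + X) with (h z k - h c k) in H3 by ring.
  assert (A * norm (vsub z c) <= A * (eps / (2 * A))) by (apply Rmult_le_compat_l; lra).
  replace (A * (eps / (2 * A))) with (eps / 2) in H4 by (field; lra).
  unfold A in H4. nra.
Qed.

(** * The closed loop *)

Lemma pos_def_nonneg m (W : vec m -> R) : pos_def W -> forall z, 0 <= W z.
Proof.
  intros [H0 Hpos] z. destruct (classic (exists k, z k <> 0)) as [H|H].
  - left. apply Hpos; auto.
  - replace z with (vzero m); [lra|].
    apply functional_extensionality. intros k. unfold vzero. apply NNPP. intros Hk. eauto.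
Qed.

Section ClosedLoop.
Variables (n q N E : nat)
  (f : vec n -> vec q -> vec n) (h : vec n -> vec q) (sigma : R)
  (a : Fin.t N -> Fin.t N -> R) (edge : Fin.t E -> Fin.t N * Fin.t N)
  (p : Fin.t E -> nat)
  (psi : forall g : Fin.t E, vec (p g) -> vec q -> vec (p g))
  (phi : forall g : Fin.t E, vec (p g) -> vec q -> vec q)
  (Psi : forall g : Fin.t E, vec (p g) -> R)
  (lam2 : R)
  (x : Fin.t N -> R -> vec n)
  (eta : forall g : Fin.t E, R -> vec (p g)).

Hypothesis HN : (0 < N)%nat.
Hypothesis Hadj : sym_nonneg_adj a.
Hypothesis Hcon : connected a.
Hypothesis Hedge : edge_enum a edge.
Hypothesis Hlam : smallest_nonzero_eigenvalue (laplacian a) lam2.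

Let B := incidence a edge.
Let y := fun i t => h (x i t).
Let rho := fun g t => vsum N (fun j => vscale (B j g) (y j t)).
Let v := fun g t => phi g (eta g t) (rho g t).
Let u := fun i t => vopp (vsum E (fun g => vscale (B i g) (v g t))).
Let ybar := fun t => vscale (/ INR N) (vsum N (fun j => y j t)).

Let dev i t := dot (vsub (y i t) (ybar t)) (vsub (y i t) (ybar t)).
Let disagreement t := fsum N (fun i => dev i t).

Lemma dev_nonneg i t : 0 <= dev i t.
Proof. apply dot_self_nonneg. Qed.

Lemma dev_le_disagreement i t : dev i t <= disagreement t.
Proof. apply (fsum_ge_term N (fun i => dev i t)). intros; apply dev_nonneg. Qed.

Lemma u_sum_zero t k : fsum N (fun i => u i t k) = 0.
Proof.
  unfold u, vopp, vsum, vscale. rewrite fsum_opp, fsum_swap, (fsum_zero E); [ring|].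
  intros g. rewrite (fsum_ext N _ (fun i => v g t k * B i g)) by (intros; ring).
  rewrite fsum_scal. unfold B. rewrite (incidence_col_sum N E a edge Hedge). ring.
Qed.

Lemma y_dot_u_sum t :
  fsum N (fun i => dot (y i t) (u i t)) = - fsum E (fun g => dot (v g t) (rho g t)).
Proof.
  unfold dot, u, rho, vopp, vsum, vscale. rewrite <- fsum_opp.
  rewrite (fsum_ext N _ (fun i => fsum q (fun k => fsum E (fun g => - (y i t k * B i g * v g t k))))).
  2:{ intros i. apply fsum_ext. intros k. rewrite <- fsum_opp, <- fsum_scal.
      apply fsum_ext. intros; ring. }
  rewrite fsum_swap3. apply fsum_ext. intros g. rewrite <- fsum_opp. apply fsum_ext. intros k.
  rewrite fsum_opp. f_equal. rewrite <- fsum_scal. apply fsum_ext. intros; ring.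
Qed.

Lemma pair_sqr_sum t :
  fsum N (fun i => fsum N (fun j => norm (vsub (y i t) (y j t)) ^ 2)) = 2 * INR N * disagreement t.
Proof.
  rewrite (fsum_ext N _ (fun i => fsum N (fun j =>
             fsum q (fun k => (y i t k - y j t k) * (y i t k - y j t k)))))
    by (intros i; apply fsum_ext; intros j; rewrite norm_pow2; reflexivity).
  rewrite fsum_swap3.
  transitivity (fsum q (fun k => 2 * INR N *
                  fsum N (fun i => (y i t k - ybar t k) * (y i t k - ybar t k)))).
  - apply fsum_ext; intros k. rewrite fsum_swap, fsum_pair_diff. unfold ybar.
    exact (eq_sym (fsum_variance N (fun i => y i t k) HN)).
  - rewrite fsum_scal. f_equal. unfold disagreement, dev, dot. apply fsum_swap.
Qed.

Lemma pair_dot_sum t :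
  fsum N (fun i => fsum N (fun j => dot (vsub (y i t) (y j t)) (vsub (u i t) (u j t)))) =
  2 * INR N * fsum N (fun i => dot (y i t) (u i t)).
Proof.
  unfold dot at 1. unfold vsub. rewrite fsum_swap3.
  rewrite (fsum_ext q _ (fun k => fsum N (fun i => fsum N (fun j =>
             (y i t k - y j t k) * (u i t k - u j t k))))) by (intros; apply fsum_swap).
  rewrite (fsum_ext q _ (fun k => 2 * INR N * fsum N (fun i => y i t k * u i t k)))
    by (intros k; rewrite fsum_pair_diff, u_sum_zero; ring).
  rewrite fsum_scal. f_equal. unfold dot. apply fsum_swap.
Qed.

Lemma rho_energy_ge t : lam2 * disagreement t <= fsum E (fun g => dot (rho g t) (rho g t)).
Proof.
  unfold dot at 1. rewrite fsum_swap. unfold disagreement, dev, dot. rewrite fsum_swap.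
  rewrite <- fsum_scal. apply fsum_le. intros k.
  set (z := fun j => y j t k - ybar t k).
  assert (Hz : fsum N z = 0).
  { unfold z. rewrite fsum_minus, fsum_const. unfold ybar, vscale, vsum.
    pose proof (lt_0_INR _ HN). field. lra. }
  eapply Rle_trans; [exact (algebraic_connectivity_bound N E a edge lam2 Hadj Hcon Hedge Hlam z Hz)|].
  right. apply fsum_ext. intros g.
  replace z with (fun j => y j t k + (- ybar t k) * 1) by (apply functional_extensionality; intros; unfold z; ring).
  rewrite trmul_lin, (trmul_incidence_const N E a edge Hedge).
  unfold trmul, rho, vsum, vscale, B. ring.
Qed.

Variable Dh : vec n -> mat q n.
Hypothesis HDh1 : forall x eps, 0 < eps -> exists del, 0 < del /\
  forall v, norm v < del -> norm (vsub (vsub (h (vadd x v)) (h x)) (mvmul (Dh x) v)) <= eps * norm v.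
Hypothesis HDh2 : forall x eps, 0 < eps -> exists del, 0 < del /\
  forall z, norm (vsub z x) < del -> forall i k, Rabs (Dh z i k - Dh x i k) < eps.
Hypothesis Hx : forall i t, 0 < t -> vderiv (x i) t (f (x i t) (u i t)).
Hypothesis Heta : forall g t, 0 < t -> vderiv (eta g) t (psi g (eta g t) (rho g t)).

Let ydot j t k := dot (fun m => Dh (x j t) k m) (f (x j t) (u j t)).

Lemma y_deriv j t k : 0 < t -> derivable_pt_lim (fun s => y j s k) t (ydot j t k).
Proof.
  intros Ht. apply (chain_rule1 n (fun z => h z k) (x j t)); auto.
  intros eps Heps. destruct (HDh1 (x j t) eps Heps) as [del [Hd H]]. exists del. split; auto.
  intros w Hw. eapply Rle_trans; [|exact (H w Hw)].
  exact (Rabs_coord_le_norm q (vsub (vsub (h (vadd (x j t) w)) (h (x j t))) (mvmul (Dh (x j t)) w)) k).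
Qed.

Lemma rho_cont g t : 0 < t -> vcont_at (rho g) t.
Proof.
  intros Ht k. apply derivable_continuous_pt.
  exists (fsum N (fun j => B j g * ydot j t k)).
  apply (fsum_derivable_pt_lim N (fun j s => B j g * y j s k)). intros j.
  apply derivable_pt_lim_scal, y_deriv; auto.
Qed.

Variables (Phi : vec n -> vec n -> R) (G1 G2 : vec n -> vec n -> vec n).
Hypothesis HPhi : forall x x' eps, 0 < eps -> exists del, 0 < del /\
  forall a b, norm a + norm b < del ->
    Rabs (Phi (vadd x a) (vadd x' b) - Phi x x' - dot (G1 x x') a - dot (G2 x x') b)
      <= eps * (norm a + norm b).
Hypothesis Hiofp : forall x x' u u',
  dot (G1 x x') (f x u) + dot (G2 x x') (f x' u')
    <= sigma * (norm (vsub (h x) (h x')) ^ 2) + dot (vsub (h x) (h x')) (vsub u u').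
Hypothesis Hdiss : forall g, edge_dissipative (psi g) (phi g) (Psi g).

Let V t := fsum N (fun i => fsum N (fun j => Phi (x i t) (x j t)))
           + 2 * INR N * fsum E (fun g => Psi g (eta g t)).

Lemma storage_pairs_rate t : 0 < t ->
  derivable_pt_lim (fun s => fsum N (fun i => fsum N (fun j => Phi (x i s) (x j s)))) t
    (fsum N (fun i => fsum N (fun j => dot (G1 (x i t) (x j t)) (f (x i t) (u i t))
                                      + dot (G2 (x i t) (x j t)) (f (x j t) (u j t))))).
Proof.
  intros Ht.
  apply (fsum_derivable_pt_lim N (fun i s => fsum N (fun j => Phi (x i s) (x j s)))). intros i.
  apply (fsum_derivable_pt_lim N (fun j s => Phi (x i s) (x j s))). intros j.
  apply (chain_rule2 n n Phi (x i t) (x j t)); auto.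
Qed.

(* Summing the iOFP inequality over all ordered pairs of agents. *)
Lemma storage_pairs_rate_le t :
  fsum N (fun i => fsum N (fun j => dot (G1 (x i t) (x j t)) (f (x i t) (u i t))
                                   + dot (G2 (x i t) (x j t)) (f (x j t) (u j t))))
  <= 2 * INR N * (sigma * disagreement t - fsum E (fun g => dot (v g t) (rho g t))).
Proof.
  eapply Rle_trans.
  - apply fsum_le; intros i; apply fsum_le; intros j. apply Hiofp.
  - right.
    rewrite (fsum_ext N _ (fun i => sigma * fsum N (fun j => norm (vsub (y i t) (y j t)) ^ 2)
               + fsum N (fun j => dot (vsub (y i t) (y j t)) (vsub (u i t) (u j t)))))
      by (intros i; rewrite fsum_plus, fsum_scal; reflexivity).
    rewrite fsum_plus, fsum_scal, pair_sqr_sum, pair_dot_sum, y_dot_u_sum. ring.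
Qed.

Lemma lyapunov_rate t : 0 < t -> exists D, derivable_pt_lim V t D /\
  D <= - (2 * INR N * (lam2 - sigma)) * disagreement t.
Proof.
  intros Ht.
  destruct (fin_choice E (fun g D => derivable_pt_lim (fun s => Psi g (eta g s)) t D /\
              D <= - dot (rho g t) (rho g t) + dot (v g t) (rho g t)) 0) as [Dg HDg].
  { intros g. apply (Hdiss g 0 (t + 1) (eta g) (rho g)); try lra.
    - intros s Hs. apply rho_cont. lra.
    - intros s Hs. apply Heta. lra. }
  eexists. split.
  - apply derivable_pt_lim_plus; [apply storage_pairs_rate; auto|].
    apply (derivable_pt_lim_scal (fun s => fsum E (fun g => Psi g (eta g s)))).
    apply (fsum_derivable_pt_lim E (fun g s => Psi g (eta g s))). intros g. apply HDg.
  - pose proof (storage_pairs_rate_le t).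
    assert (fsum E Dg <= - fsum E (fun g => dot (rho g t) (rho g t))
                         + fsum E (fun g => dot (v g t) (rho g t))).
    { rewrite <- fsum_opp, <- fsum_plus. apply fsum_le. intros g. apply HDg. }
    change (fsum E (fun g => Dg g)) with (fsum E Dg).
    pose proof (rho_energy_ge t). pose proof (lt_0_INR _ HN).
    assert (2 * INR N * fsum E Dg <= 2 * INR N * (- fsum E (fun g => dot (rho g t) (rho g t))
              + fsum E (fun g => dot (v g t) (rho g t)))) by (apply Rmult_le_compat_l; lra).
    assert (2 * INR N * (lam2 * disagreement t)
              <= 2 * INR N * fsum E (fun g => dot (rho g t) (rho g t)))
      by (apply Rmult_le_compat_l; lra).
    nra.
Qed.

Hypothesis Hflip : loc_lipschitz2 f.
Hypothesis Hphic : forall g, continuous2 (phi g).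
Variable M : R.
Hypothesis HM : forall t, 0 <= t -> (forall i, norm (x i t) <= M) /\ (forall g, norm (eta g t) <= M).

Lemma y_bounded : exists Cy, 0 <= Cy /\ forall j t k, 0 <= t -> Rabs (y j t k) <= Cy.
Proof.
  destruct (fin_uniform_bound q (fun k z => h z k) (box n M)) as [C [HC0 HC]].
  { intros k. apply contv_bounded_on_box. exact (frechet_coord_cont n q h Dh HDh1 k). }
  exists C. split; auto. intros j t k Ht. apply HC, box_of_norm, HM; auto.
Qed.

Lemma v_bounded : exists Cv, 0 <= Cv /\ forall g t k, 0 <= t -> Rabs (v g t k) <= Cv.
Proof.
  destruct y_bounded as [Cy [Hy0 Hy]]. destruct (fin_bound2 N E B) as [Cb [Hb0 Hb]].
  set (M' := Rmax M (INR N * (Cb * Cy))).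
  destruct (fin_uniform_bound E (fun g (tk : R * Fin.t q) => v g (fst tk) (snd tk))
              (fun tk => 0 <= fst tk)) as [C [HC0 HC]].
  - intros g. destruct (continuous2_bounded_on_boxes _ _ _ (phi g) (Hphic g) M') as [C [_ HC]].
    exists C. intros [t k] Ht. simpl in *. apply HC.
    + eapply box_le; [apply Rmax_l|]. apply box_of_norm, HM; auto.
    + intros k'. eapply Rle_trans; [|apply Rmax_r]. unfold rho, vsum, vscale.
      apply fsum_Rabs_mul_le; auto.
  - exists C. split; auto. intros g t k Ht. exact (HC g (t, k) Ht).
Qed.

Lemma ydot_bounded : exists Kd, 0 <= Kd /\ forall j t k, 0 < t -> Rabs (ydot j t k) <= Kd.
Proof.
  destruct v_bounded as [Cv [Hv0 Hv]]. destruct (fin_bound2 N E B) as [Cb [Hb0 Hb]].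
  set (Cu := INR E * (Cb * Cv)).
  assert (Hu : forall j t k, 0 <= t -> Rabs (u j t k) <= Cu).
  { intros j t k Ht. unfold u, vopp, vsum, vscale. rewrite Rabs_Ropp.
    apply fsum_Rabs_mul_le; auto. }
  destruct (loc_lipschitz2_bounded_on_boxes _ _ _ f Hflip (Rmax M Cu)) as [Cf [Hf0 HCf]].
  destruct (fin_uniform_bound q (fun k (zm : vec n * Fin.t n) => Dh (fst zm) k (snd zm))
              (fun zm => box n M (fst zm))) as [Cd [Hd0 HCd]].
  { intros k. destruct (fin_uniform_bound n (fun m z => Dh z k m) (box n M)) as [C [_ HC]].
    - intros m. apply contv_bounded_on_box. intros c eps Heps.
      destruct (HDh2 c eps Heps) as [del [Hd H]]. exists del. split; auto.
    - exists C. intros [z m] Hz. apply HC. auto. }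
  exists (INR n * (Cd * Cf)). split.
  { apply Rmult_le_pos; [apply pos_INR|]. apply Rmult_le_pos; auto. }
  intros j t k Ht. unfold ydot, dot. apply fsum_Rabs_mul_le; auto.
  - intros m. apply (HCd k (x j t, m)). apply box_of_norm, HM. lra.
  - intros m. apply HCf.
    + eapply box_le; [apply Rmax_l|]. apply box_of_norm, HM. lra.
    + eapply box_le; [apply Rmax_r|]. intros k'. apply Hu. lra.
Qed.

Lemma dev_lipschitz i : exists K, 0 < K /\ forall s1 s2, 0 < s1 -> s1 <= s2 ->
  Rabs (dev i s2 - dev i s1) <= K * (s2 - s1).
Proof.
  destruct y_bounded as [Cy [Hy0 Hy]]. destruct ydot_bounded as [Kd [Hk0 Hk]].
  set (K := INR q * (2 * (2 * Kd) * (2 * Cy))).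
  assert (HK : 0 <= K) by (apply Rmult_le_pos; [apply pos_INR|nra]).
  exists (K + 1). split. lra. intros s1 s2 H1 H2.
  enough (Rabs (dev i s2 - dev i s1) <= K * (s2 - s1)) by nra.
  apply (deriv_bounded_lipschitz (dev i) 0 s1 s2 (s2 + 1)); try lra.
  intros s Hs.
  set (A := fun k s => y i s k - ybar s k).
  set (A' := fun k => ydot i s k - / INR N * fsum N (fun j => ydot j s k)).
  assert (HA : forall k, derivable_pt_lim (A k) s (A' k)).
  { intros k. apply derivable_pt_lim_minus; [apply y_deriv; lra|].
    apply (derivable_pt_lim_scal (fun s => fsum N (fun j => y j s k))).
    apply (fsum_derivable_pt_lim N (fun j s => y j s k)). intros j. apply y_deriv; lra. }
  exists (fsum q (fun k => A' k * A k s + A k s * A' k)). split.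
  - apply (fsum_derivable_pt_lim q (fun k s => A k s * A k s)). intros k.
    apply derivable_pt_lim_mult; apply HA.
  - eapply Rle_trans. apply fsum_abs. apply fsum_bound. intros k.
    assert (Ha : Rabs (A k s) <= 2 * Cy).
    { unfold A, Rminus. eapply Rle_trans. apply Rabs_triang. rewrite Rabs_Ropp.
      pose proof (Hy i s k ltac:(lra)).
      pose proof (fsum_avg_Rabs_le N (fun j => y j s k) Cy HN (fun j => Hy j s k ltac:(lra))).
      unfold ybar, vscale, vsum. lra. }
    assert (Ha' : Rabs (A' k) <= 2 * Kd).
    { unfold A', Rminus. eapply Rle_trans. apply Rabs_triang. rewrite Rabs_Ropp.
      pose proof (Hk i s k ltac:(lra)).
      pose proof (fsum_avg_Rabs_le N (fun j => ydot j s k) Kd HN (fun j => Hk j s k ltac:(lra))).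
      lra. }
    replace (A' k * A k s + A k s * A' k) with (2 * (A' k * A k s)) by ring.
    rewrite Rabs_mult, Rabs_mult, (Rabs_right 2) by lra.
    assert (Rabs (A' k) * Rabs (A k s) <= 2 * Kd * (2 * Cy))
      by (apply Rmult_le_compat; auto; apply Rabs_pos).
    lra.
Qed.

Hypothesis Hsig : sigma < lam2.
Hypothesis HPhi0 : forall x x', 0 <= Phi x x'.
Hypothesis HPsi : forall g, pos_def (Psi g).

Lemma dev_vanishes i e : 0 < e -> exists T, forall t, T <= t -> dev i t < e.
Proof.
  intros He. set (c := 2 * INR N * (lam2 - sigma)).
  assert (Hc : 0 < c) by (unfold c; pose proof (lt_0_INR _ HN); nra).
  destruct (lyapunov_rate_vanishes V (fun t => c * dev i t)) with (e := c * e)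
    as [T HT].
  - intros t. pose proof (lt_0_INR _ HN).
    assert (0 <= fsum N (fun i => fsum N (fun j => Phi (x i t) (x j t))))
      by (apply fsum_nonneg; intros; apply fsum_nonneg; intros; apply HPhi0).
    assert (0 <= fsum E (fun g => Psi g (eta g t)))
      by (apply fsum_nonneg; intros g; apply (pos_def_nonneg _ _ (HPsi g))).
    unfold V. nra.
  - intros t. pose proof (dev_nonneg i t). nra.
  - intros t Ht. destruct (lyapunov_rate t Ht) as [D [HD HD']]. exists D. split; auto.
    pose proof (dev_le_disagreement i t). fold c in HD'. nra.
  - destruct (dev_lipschitz i) as [K [HK Hlip]]. exists (c * K). split. nra.
    intros s1 s2 H1 H2. rewrite <- Rmult_minus_distr_l, Rabs_mult, Rabs_right by lra.
    rewrite Rmult_assoc. apply Rmult_le_compat_l. lra. auto.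
  - nra.
  - exists T. intros t Ht. specialize (HT t Ht). simpl in HT.
    apply (Rmult_lt_reg_l c); auto.
Qed.

End ClosedLoop.

Theorem proposition1
  (n q N E : nat)
  (f : vec n -> vec q -> vec n) (h : vec n -> vec q) (sigma : R)
  (a : Fin.t N -> Fin.t N -> R) (edge : Fin.t E -> Fin.t N * Fin.t N)
  (p : Fin.t E -> nat)
  (psi : forall g : Fin.t E, vec (p g) -> vec q -> vec (p g))
  (phi : forall g : Fin.t E, vec (p g) -> vec q -> vec q)
  (Psi : forall g : Fin.t E, vec (p g) -> R)
  (lam2 : R)
  (x : Fin.t N -> R -> vec n)
  (eta : forall g : Fin.t E, R -> vec (p g)) :
  loc_lipschitz2 f ->
  C1_map h ->
  iOFP f h sigma ->
  sym_nonneg_adj a ->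
  connected a ->
  edge_enum a edge ->
  (forall g, loc_lipschitz2 (psi g)) ->
  (forall g, continuous2 (phi g)) ->
  (forall g, pos_def (Psi g)) ->
  (forall g, edge_dissipative (psi g) (phi g) (Psi g)) ->
  smallest_nonzero_eigenvalue (laplacian a) lam2 ->
  sigma < lam2 ->
  let B := incidence a edge in
  let y := fun i t => h (x i t) in
  let rho := fun g t => vsum N (fun j => vscale (B j g) (y j t)) in
  let v := fun g t => phi g (eta g t) (rho g t) in
  let u := fun i t => vopp (vsum E (fun g => vscale (B i g) (v g t))) in
  (forall i t, 0 < t -> vderiv (x i) t (f (x i t) (u i t))) ->
  (forall g t, 0 < t -> vderiv (eta g) t (psi g (eta g t) (rho g t))) ->
  (exists M, forall t, 0 <= t ->
     (forall i, norm (x i t) <= M) /\ (forall g, norm (eta g t) <= M)) ->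
  let ybar := fun t => vscale (/ INR N) (vsum N (fun j => y j t)) in
  forall i, forall eps, 0 < eps -> exists T, forall t, T <= t ->
    norm (vsub (y i t) (ybar t)) < eps.
Proof.
  intros Hf [Dh [HDh1 HDh2]] [Phi [G1 [G2 [alo [ahi [[HPhi _] [HPhi0 [_ [_ [_ Hiofp]]]]]]]]]]
    Hadj Hcon Hedge _ Hphi HPsi Hdiss Hlam Hsig B y rho v u Hx Heta [M HM] ybar i eps Heps.
  destruct (dev_vanishes n q N E f h sigma a edge p psi phi Psi lam2 x eta (fin_card_pos _ i)
              Hadj Hcon Hedge Hlam Dh HDh1 HDh2 Hx Heta Phi G1 G2 HPhi Hiofp Hdiss Hf Hphi
              M HM Hsig HPhi0 HPsi i (eps * eps)) as [T HT]; [nra|].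
  exists T. intros t Ht. unfold norm.
  rewrite <- (sqrt_square eps) by lra. apply sqrt_lt_1_alt. split; [apply dot_self_nonneg|].
  exact (HT t Ht).
Qed.
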